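(* There is a constant $C>0$ such that for every $p\in\mathbb N$ and every polynomial $u$ of degree $\le p$ on $\widehat K$, writing $u=u_{\mathcal V}+u_{\mathcal E_1}+u_{\mathcal E_2}+u_{\mathcal E_3}+u_{\mathcal I}$ with $u_{\mathcal V}=\sum_{j=1}^3\alpha_j^{\mathcal V}\varphi_j^{\mathcal V}$, $u_{\mathcal E_m}=\sum_{j=0}^{p-2}\alpha_j^{\mathcal E_m}\varphi_j^{\mathcal E_m}$, $u_{\mathcal I}=\sum_{i+j\le p-3}\alpha^{\mathcal I}_{(ij)}\varphi^{\mathcal I}_{(ij)}$ (the expansion in the basis described in the context), one has $$\|u_{\mathcal V}\|^2_{L^2(\widehat K)}\le C\sum_{j=1}^3|\alpha^{\mathcal V}_j|^2,\quad\|u_{\mathcal E_m}\|^2_{L^2(\widehat K)}\le C\sum_{j=0}^{p-2}|\alpha_j^{\mathcal E_m}|^2\ (m=1,2,3),\quad\|u_{\mathcal I}\|^2_{L^2(\widehat K)}=\sum_{i+j\le p-3}|\alpha^{\mathcal I}_{(ij)}|^2,$$ and consequently $$\|u\|^2_{L^2(\widehat K)}\le C\Big(\sum_{j=1}^3|\alpha_j^{\mathcal V}|^2+\sum_{m=1}^3\sum_{j=0}^{p-2}|\alpha_j^{\mathcal E_m}|^2+\sum_{i+j\le p-3}|\alpha^{\mathcal I}_{(ij)}|^2\Big).$$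
   Context: $\widehat K=\mathrm{conv}\{(0,0),(1,0),(0,1)\}$ with barycentric coordinates $\lambda_1,\lambda_2,\lambda_3$ and edges $\mathcal E_1,\mathcal E_2,\mathcal E_3$. $\ell_n$ are the Legendre polynomials, $L_n(s):=\int_{-1}^s\ell_{n-1}(t)\,dt$ ($n\ge1$), $P_n^{(\alpha,\beta)}$ the Jacobi polynomials (orthogonal on $(-1,1)$ w.r.t. weight $(1-x)^\alpha(1+x)^\beta$, standard normalization), $L_n^{\mathcal S}(s,t):=t^nL_n(s/t)$, $P_n^{\mathcal S,(\alpha,\beta)}(s,t):=t^nP_n^{(\alpha,\beta)}(s/t)$. The basis of polynomials of degree $\le p$ on $\widehat K$: vertex functions $\varphi^{\mathcal V}_i:=\lambda_i$; for edge $\mathcal E_m$ with endpoints $e_1,e_2$, $\varphi^{\mathcal E_m}_i:=\sqrt{\tfrac{2i+3}{2}}L^{\mathcal S}_{i+2}(\lambda_{e_2}-\lambda_{e_1},\lambda_{e_1}+\lambda_{e_2})$, $0\le i\le p-2$; cell functions $\varphi^{\mathcal I}_{(i,j)}:=c_{ij}\lambda_1\lambda_2\lambda_3P_i^{\mathcal S,(2,2)}(\lambda_1-\lambda_2,\lambda_1+\lambda_2)P_j^{(2i+5,2)}(2\lambda_3-1)$, $0\le i+j\le p-3$, with $c_{ij}$ chosen so that $\|\varphi^{\mathcal I}_{(i,j)}\|_{L^2(\widehat K)}=1$. *)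

From Stdlib Require Import Reals Lra Lia List Arith.
From Stdlib Require Binomial.
From Coquelicot Require Import Coquelicot.
Open Scope R_scope.

Definition Rsum (n : nat) (f : nat -> R) : R :=
  fold_right Rplus 0 (map f (seq 0 n)).

Definition inK (x y : R) : Prop := 0 <= x /\ 0 <= y /\ x + y <= 1.

(* Squared L2 norm on K (iterated Riemann integral; integrands here are
   polynomials, hence continuous). *)
Definition L2sq (f : R -> R -> R) : R :=
  RInt (fun x => RInt (fun y => (f x y) ^ 2) 0 (1 - x)) 0 1.

(* Barycentric coordinates: vertex 1 = (0,0), vertex 2 = (1,0), vertex 3 = (0,1). *)
Definition lam (i : nat) (x y : R) : R :=
  match i with
  | 1%nat => 1 - x - y
  | 2%nat => x
  | 3%nat => y
  | _ => 0
  end.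

(* Jacobi polynomial P_n^{(a,b)} in the standard normalization
   (P_n^{(a,b)}(1) = binom(n+a, n)), for integer parameters a, b >= 0:
   P_n^{(a,b)}(x) = sum_{s=0}^n C(n+a,n-s) C(n+b,s) ((x-1)/2)^s ((x+1)/2)^(n-s). *)
Definition jacobiP (a b n : nat) (x : R) : R :=
  Rsum (S n) (fun s =>
    Binomial.C (n + a) (n - s) * Binomial.C (n + b) s
    * ((x - 1) / 2) ^ s * ((x + 1) / 2) ^ (n - s)).

Definition legendre (n : nat) (x : R) : R := jacobiP 0 0 n x.

Definition intLegendre (n : nat) (s : R) : R :=
  RInt (legendre (n - 1)) (-1) s.

(* Scaled versions: L^S_n(s,t) = t^n L_n(s/t), P^{S,(a,b)}_n(s,t) = t^n P_n^{(a,b)}(s/t).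
   (At points of K where t = 0 one also has s = 0, and these formulas give the
   value 0 of the corresponding homogeneous polynomial when n >= 1.) *)
Definition intLegendreS (n : nat) (s t : R) : R := t ^ n * intLegendre n (s / t).
Definition jacobiPS (a b n : nat) (s t : R) : R := t ^ n * jacobiP a b n (s / t).

(* Endpoints (e1, e2) of edge E_m: E_1 = [V1,V2], E_2 = [V2,V3], E_3 = [V3,V1]. *)
Definition edge1 (m : nat) : nat := m.
Definition edge2 (m : nat) : nat := match m with 1%nat => 2%nat | 2%nat => 3%nat | _ => 1%nat end.

Definition phiV (i : nat) (x y : R) : R := lam i x y.

Definition phiE (m i : nat) (x y : R) : R :=
  sqrt ((2 * INR i + 3) / 2) *
  intLegendreS (i + 2)
    (lam (edge2 m) x y - lam (edge1 m) x y)
    (lam (edge1 m) x y + lam (edge2 m) x y).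

Definition phiI0 (i j : nat) (x y : R) : R :=
  lam 1 x y * lam 2 x y * lam 3 x y
  * jacobiPS 2 2 i (lam 1 x y - lam 2 x y) (lam 1 x y + lam 2 x y)
  * jacobiP (2 * i + 5) 2 j (2 * lam 3 x y - 1).

Definition cI (i j : nat) : R := / sqrt (L2sq (phiI0 i j)).

Definition phiI (i j : nat) (x y : R) : R := cI i j * phiI0 i j x y.

Definition uV (aV : nat -> R) (x y : R) : R :=
  Rsum 3 (fun k => aV (S k) * phiV (S k) x y).

(* sum over 0 <= j <= p-2, i.e. j < p-1 (empty when p <= 1). *)
Definition uE (p m : nat) (a : nat -> R) (x y : R) : R :=
  Rsum (Nat.pred p) (fun j => a j * phiE m j x y).

(* sum over i + j <= p - 3 (empty when p <= 2). *)
Definition uI (p : nat) (a : nat -> nat -> R) (x y : R) : R :=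
  Rsum p (fun i => Rsum p (fun j =>
    if (i + j + 3 <=? p)%nat then a i j * phiI i j x y else 0)).

Definition sqV (aV : nat -> R) : R := Rsum 3 (fun k => (aV (S k)) ^ 2).
Definition sqE (p : nat) (a : nat -> R) : R := Rsum (Nat.pred p) (fun j => (a j) ^ 2).
Definition sqI (p : nat) (a : nat -> nat -> R) : R :=
  Rsum p (fun i => Rsum p (fun j =>
    if (i + j + 3 <=? p)%nat then (a i j) ^ 2 else 0)).

Definition is_poly_deg (p : nat) (u : R -> R -> R) : Prop :=
  exists c : nat -> nat -> R, forall x y,
    u x y = Rsum (S p) (fun i => Rsum (S p) (fun j =>
      if (i + j <=? p)%nat then c i j * x ^ i * y ^ j else 0)).

(* All integrands are polynomials, and on the triangle a polynomial is integrated exactly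
   monomial by monomial; this makes the iterated integral [L2sq] linear, monotone and independent
   of the order of integration.  The Duffy substitution [x = (1 - y) (1 - s) / 2] separates the
   cell functions into a Jacobi polynomial [P_i^(2,2)] in [s] and [P_j^(2i+5,2)] in [2 y - 1], so
   they are orthonormal by the orthogonality of Jacobi polynomials.  The analogous substitution
   along an edge reduces the Gram matrix of the edge functions to that of the integrated Legendre
   polynomials [L_n], which is pentadiagonal ([L_n] is orthogonal to [L_m] for [|n - m| >= 3])
   with entries bounded by [2] (from [||l_n||^2 = 2 / (2 n + 1)]); such a matrix has norm at most
   [10].  The vertex part is bounded pointwise by Cauchy-Schwarz, and the sum of the five parts by
   [(a_1 + ... + a_5)^2 <= 5 (a_1^2 + ... + a_5^2)]. *)

From Stdlib Require Import Reals Lra Lia List Arith Psatz.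
From Stdlib Require Binomial.
From Coquelicot Require Import Coquelicot.
Open Scope R_scope.

Lemma fold_right_Rplus_init (l : list R) a :
  fold_right Rplus a l = fold_right Rplus 0 l + a.
Proof. induction l as [|x l IH]; simpl; [lra | rewrite IH; lra]. Qed.

Lemma Rsum_0 f : Rsum 0 f = 0.
Proof. reflexivity. Qed.

Lemma Rsum_S n f : Rsum (S n) f = Rsum n f + f n.
Proof.
  unfold Rsum. rewrite seq_S, map_app, fold_right_app. simpl.
  rewrite fold_right_Rplus_init. lra.
Qed.

Lemma Rsum_shift n f : Rsum (S n) f = f 0%nat + Rsum n (fun i => f (S i)).
Proof. unfold Rsum. simpl. f_equal. rewrite <- seq_shift, map_map. reflexivity. Qed.

Lemma Rsum_ext n f g : (forall i, (i < n)%nat -> f i = g i) -> Rsum n f = Rsum n g.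
Proof.
  induction n as [|n IH]; intros H; [reflexivity|].
  rewrite !Rsum_S, IH, (H n); [reflexivity | lia | intros; apply H; lia].
Qed.

Lemma Rsum_plus n f g : Rsum n (fun i => f i + g i) = Rsum n f + Rsum n g.
Proof. induction n as [|n IH]; [rewrite !Rsum_0; lra|]. rewrite !Rsum_S, IH. lra. Qed.

Lemma Rsum_scal n c f : Rsum n (fun i => c * f i) = c * Rsum n f.
Proof. induction n as [|n IH]; [rewrite !Rsum_0; lra|]. rewrite !Rsum_S, IH. lra. Qed.

Lemma Rsum_scal_lr n c d f : c * Rsum n f * d = Rsum n (fun i => c * f i * d).
Proof. induction n as [|n IH]; [rewrite !Rsum_0; ring|]. rewrite !Rsum_S, <- IH. ring. Qed.

Lemma Rsum_le n f g : (forall i, (i < n)%nat -> f i <= g i) -> Rsum n f <= Rsum n g.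
Proof.
  induction n as [|n IH]; intros H; [rewrite !Rsum_0; lra|]. rewrite !Rsum_S.
  assert (Rsum n f <= Rsum n g) by (apply IH; intros; apply H; lia).
  assert (f n <= g n) by (apply H; lia). lra.
Qed.

Lemma Rsum_zero n f : (forall i, (i < n)%nat -> f i = 0) -> Rsum n f = 0.
Proof.
  intros H. rewrite (Rsum_ext n f (fun i => 0 * f i)) by (intros i Hi; rewrite H by lia; ring).
  rewrite Rsum_scal. ring.
Qed.

Lemma Rsum_nonneg n f : (forall i, (i < n)%nat -> 0 <= f i) -> 0 <= Rsum n f.
Proof. intros H. rewrite <- (Rsum_zero n (fun _ => 0)) by reflexivity. apply Rsum_le; auto. Qed.

Lemma Rsum_swap n m (f : nat -> nat -> R) :
  Rsum n (fun i => Rsum m (fun j => f i j)) = Rsum m (fun j => Rsum n (fun i => f i j)).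
Proof.
  induction n as [|n IH]; [rewrite Rsum_0; symmetry; apply Rsum_zero; reflexivity|].
  rewrite Rsum_S, IH, <- Rsum_plus. apply Rsum_ext. intros. rewrite Rsum_S. reflexivity.
Qed.

Lemma Rsum_mult n m f g :
  Rsum n f * Rsum m g = Rsum n (fun i => Rsum m (fun j => f i * g j)).
Proof.
  induction n as [|n IH]; [rewrite !Rsum_0; lra|].
  rewrite !Rsum_S, Rmult_plus_distr_r, IH, Rsum_scal. reflexivity.
Qed.

Lemma Rsum_delta n k f :
  (k < n)%nat -> Rsum n (fun i => if (i =? k)%nat then f i else 0) = f k.
Proof.
  induction n as [|n IH]; intros Hk; [lia|]. rewrite Rsum_S.
  destruct (Nat.eq_dec k n) as [->|Hne].
  - rewrite Nat.eqb_refl, Rsum_zero; [lra|].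
    intros i Hi. destruct (Nat.eqb_spec i n); [lia | reflexivity].
  - rewrite IH by lia. destruct (Nat.eqb_spec n k); [lia | lra].
Qed.

(** * One-dimensional integrals *)

(* Coquelicot's lemmas specialized to real-valued integrands; with the normed module left
   implicit, the resulting side goals are not recognized by [ring]. *)
Lemma is_RInt_Rplus (f g : R -> R) a b If Ig :
  is_RInt f a b If -> is_RInt g a b Ig -> is_RInt (fun x => f x + g x) a b (If + Ig).
Proof. intros. apply (is_RInt_plus f g); auto. Qed.

Lemma is_RInt_Rmult_l (f : R -> R) a b c If :
  is_RInt f a b If -> is_RInt (fun x => c * f x) a b (c * If).
Proof. intros. apply (is_RInt_scal f); auto. Qed.

Lemma is_RInt_ext_R (f g : R -> R) a b l :
  (forall x, Rmin a b < x < Rmax a b -> f x = g x) -> is_RInt f a b l -> is_RInt g a b l.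
Proof. apply is_RInt_ext. Qed.

Lemma RInt_ext_R (f g : R -> R) a b :
  (forall x, Rmin a b < x < Rmax a b -> f x = g x) -> RInt f a b = RInt g a b.
Proof. apply RInt_ext. Qed.

Lemma Rmin_0_l a : 0 <= a -> Rmin 0 a = 0.
Proof. apply Rmin_left. Qed.

Lemma Rmax_0_l a : 0 <= a -> Rmax 0 a = a.
Proof. apply Rmax_right. Qed.

Lemma is_RInt_eq_value (f : R -> R) a b (l l' : R) : l = l' -> is_RInt f a b l -> is_RInt f a b l'.
Proof. intros ->; auto. Qed.

Lemma is_RInt_zero a b : is_RInt (fun _ => 0) a b 0.
Proof.
  eapply is_RInt_eq_value; [|apply (is_RInt_const a b 0)].
  cbn. unfold scal; simpl. unfold mult; simpl. ring.
Qed.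

Lemma RInt_zero a b : RInt (fun _ => 0) a b = 0.
Proof. apply is_RInt_unique, is_RInt_zero. Qed.

Lemma is_RInt_Rsum n (f : nat -> R -> R) (v : nat -> R) a b :
  (forall k, (k < n)%nat -> is_RInt (f k) a b (v k)) ->
  is_RInt (fun x => Rsum n (fun k => f k x)) a b (Rsum n v).
Proof.
  induction n as [|n IH]; intros H; [apply is_RInt_zero|].
  apply is_RInt_ext_R with (f := fun x => Rsum n (fun k => f k x) + f n x).
  { intros. rewrite Rsum_S. reflexivity. }
  rewrite Rsum_S. apply is_RInt_Rplus; [apply IH; intros k Hk | ]; apply H; lia.
Qed.

Lemma ex_RInt_continuous_R (f : R -> R) a b : (forall x, continuous f x) -> ex_RInt f a b.
Proof. intros. apply (ex_RInt_continuous f). intros; auto. Qed.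

Lemma continuous_sq (f : R -> R) x : continuous f x -> continuous (fun t => f t ^ 2) x.
Proof.
  intros H. apply (continuous_ext (fun t => f t * f t)); [intros; simpl; ring|].
  apply (continuous_mult f f); auto.
Qed.

(* Positivity of [int (f - c)^2] for the mean value [c = int f / (b - a)]. *)
Lemma RInt_sq_le (f : R -> R) a b : a < b -> (forall x, continuous f x) ->
  (RInt f a b) ^ 2 <= (b - a) * RInt (fun t => f t ^ 2) a b.
Proof.
  intros Hab Hc.
  assert (H1 : is_RInt f a b (RInt f a b))
    by (apply (RInt_correct f), ex_RInt_continuous_R; auto).
  assert (H2 : is_RInt (fun t => f t ^ 2) a b (RInt (fun t => f t ^ 2) a b)).
  { apply (RInt_correct (fun t => f t ^ 2)), ex_RInt_continuous_R.
    intros; apply continuous_sq; auto. }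
  revert H1 H2. generalize (RInt f a b) (RInt (fun t => f t ^ 2) a b). intros A B H1 H2.
  set (c := A / (b - a)).
  assert (H3 : is_RInt (fun t => (f t - c) ^ 2) a b (B + (-2 * c) * A + c ^ 2 * (b - a))).
  { apply is_RInt_ext_R with (f := fun t => (f t ^ 2 + -2 * c * f t) + c ^ 2 * 1).
    { intros; simpl; ring. }
    apply is_RInt_Rplus; [apply is_RInt_Rplus; [exact H2 | apply is_RInt_Rmult_l, H1]|].
    apply is_RInt_Rmult_l. eapply is_RInt_eq_value; [|apply (is_RInt_const a b 1)].
    cbn. unfold scal; simpl. unfold mult; simpl. ring. }
  assert (H4 : 0 <= B + (-2 * c) * A + c ^ 2 * (b - a)).
  { apply (is_RInt_ge_0 _ _ _ _ (Rlt_le _ _ Hab) H3). intros; apply pow2_ge_0. }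
  unfold c in H4.
  replace (B + -2 * (A / (b - a)) * A + (A / (b - a)) ^ 2 * (b - a))
    with (((b - a) * B - A ^ 2) / (b - a)) in H4 by (field; lra).
  assert (0 <= (b - a) * B - A ^ 2); [|lra].
  apply Rmult_le_reg_r with (/ (b - a)); [apply Rinv_0_lt_compat; lra|].
  rewrite Rmult_0_l. exact H4.
Qed.

Lemma is_RInt_pow_shift a b i :
  is_RInt (fun x => (x - a) ^ i) a b ((b - a) ^ (S i) / INR (S i)).
Proof.
  assert (HS : INR (S i) <> 0) by (apply not_0_INR; lia).
  eapply is_RInt_eq_value; [| apply (is_RInt_derive (fun x => (x - a) ^ (S i) / INR (S i)))].
  - unfold minus, plus, opp; cbn -[pow INR].
    replace (a - a) with 0 by ring. rewrite pow_i by lia. field. auto.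
  - intros x _. auto_derive; auto.
    change (match i with 0%nat => 1 | S _ => INR i + 1 end) with (INR (S i)).
    unfold Rminus. field. auto.
  - intros x _. apply (ex_derive_continuous (fun x => (x - a) ^ i)). auto_derive. auto.
Qed.

Definition beta_int (L : R) (i j : nat) : R :=
  L ^ (i + j + 1) * INR (fact i) * INR (fact j) / INR (fact (i + j + 1)).

Lemma INR_fact_S n : INR (fact (S n)) = INR (S n) * INR (fact n).
Proof. change (fact (S n)) with (S n * fact n)%nat. apply mult_INR. Qed.

(* Induction on [j], writing [(b - x)^(j+1) = (b - a) (b - x)^j - (x - a) (b - x)^j]. *)
Lemma is_RInt_beta a b i j :
  is_RInt (fun x => (x - a) ^ i * (b - x) ^ j) a b (beta_int (b - a) i j).
Proof.
  revert i. induction j as [|j IH]; intros i.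
  - apply is_RInt_eq_value with ((b - a) ^ (S i) / INR (S i)).
    + unfold beta_int. replace (i + 0 + 1)%nat with (S i) by lia. rewrite INR_fact_S.
      pose proof (INR_fact_neq_0 i). pose proof (not_0_INR (S i) ltac:(lia)).
      simpl (fact 0). simpl (INR 1). field. auto.
    + eapply is_RInt_ext_R; [|apply is_RInt_pow_shift]. intros; simpl; ring.
  - apply is_RInt_ext_R with (f := fun x => (b - a) * ((x - a) ^ i * (b - x) ^ j)
                                         + (-1) * ((x - a) ^ (S i) * (b - x) ^ j)).
    { intros. simpl. ring. }
    eapply is_RInt_eq_value; [|apply is_RInt_Rplus; apply is_RInt_Rmult_l; apply IH].
    unfold beta_int. replace (S i + j + 1)%nat with (S (i + j + 1)) by lia.
    replace (i + S j + 1)%nat with (S (i + j + 1)) by lia.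
    rewrite !INR_fact_S, !S_INR, !plus_INR. simpl pow.
    pose proof (INR_fact_neq_0 i). pose proof (INR_fact_neq_0 j).
    pose proof (INR_fact_neq_0 (i + j + 1)). pose proof (pos_INR i). pose proof (pos_INR j).
    simpl INR. field. repeat split; lra.
Qed.

Lemma is_RInt_pow_01 N : is_RInt (fun t => t ^ N) 0 1 (/ INR (S N)).
Proof.
  eapply is_RInt_ext_R; [|eapply is_RInt_eq_value; [|apply (is_RInt_pow_shift 0 1 N)]].
  - intros; simpl. rewrite Rminus_0_r. reflexivity.
  - rewrite Rminus_0_r, pow1. unfold Rdiv. ring.
Qed.

Lemma is_RInt_1m_pow_01 N : is_RInt (fun y => (1 - y) ^ N) 0 1 (/ INR (S N)).
Proof.
  eapply is_RInt_ext_R; [|eapply is_RInt_eq_value; [|apply (is_RInt_beta 0 1 0 N)]].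
  - intros; simpl; ring.
  - unfold beta_int. rewrite Rminus_0_r, pow1. simpl (fact 0). replace (0 + N + 1)%nat with (S N) by lia.
    rewrite INR_fact_S. pose proof (INR_fact_neq_0 N). pose proof (not_0_INR (S N) ltac:(lia)).
    simpl (INR 1). field. auto.
Qed.

Lemma is_RInt_affine (g : R -> R) u v Q : u <> 0 ->
  is_RInt (fun s => g (u * s + v)) (-1) 1 Q -> is_RInt g (v - u) (u + v) (u * Q).
Proof.
  intros Hu H.
  assert (Hb : is_RInt (fun s => g (u * s + v)) (/ u * (v - u) + - v / u) (/ u * (u + v) + - v / u) Q).
  { replace (/ u * (v - u) + - v / u) with (-1) by (field; auto).
    replace (/ u * (u + v) + - v / u) with 1 by (field; auto). exact H. }
  apply (is_RInt_comp_lin (fun s => g (u * s + v))), (is_RInt_Rmult_l _ _ _ u) in Hb.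
  eapply is_RInt_ext_R; [|exact Hb].
  intros x _. unfold scal; simpl. unfold mult; simpl.
  replace (u * (/ u * x + - v / u) + v) with x by (field; auto). field. auto.
Qed.

Lemma is_RInt_rescale (g : R -> R) T Q : 0 < T ->
  is_RInt (fun s => g (T * (1 + s) / 2)) (-1) 1 Q -> is_RInt g 0 T (T / 2 * Q).
Proof.
  intros HT H. pose proof (is_RInt_affine g (T / 2) (T / 2) Q ltac:(lra)) as K.
  replace (T / 2 - T / 2) with 0 in K by ring. replace (T / 2 + T / 2) with T in K by field.
  apply K. eapply is_RInt_ext_R; [|exact H]. intros; simpl; f_equal; field.
Qed.

Lemma is_RInt_rescale_rev (g : R -> R) T Q : 0 < T ->
  is_RInt (fun s => g (T * (1 - s) / 2)) (-1) 1 Q -> is_RInt g 0 T (T / 2 * Q).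
Proof.
  intros HT H. pose proof (is_RInt_affine g (- (T / 2)) (T / 2) Q ltac:(lra)) as K.
  replace (T / 2 - - (T / 2)) with T in K by field. replace (- (T / 2) + T / 2) with 0 in K by ring.
  apply is_RInt_swap in K. eapply is_RInt_eq_value; [|apply K].
  - unfold opp; simpl; unfold opp; simpl. ring.
  - eapply is_RInt_ext_R; [|exact H]. intros; simpl; f_equal; field.
Qed.

Lemma is_RInt_rescale_01 (g : R -> R) Q :
  is_RInt g (-1) 1 Q -> is_RInt (fun y => g (2 * y - 1)) 0 1 (Q / 2).
Proof.
  intros H.
  assert (Hs : is_RInt g (2 * 0 + -1) (2 * 1 + -1) Q)
    by (replace (2 * 0 + -1) with (-1) by ring; replace (2 * 1 + -1) with 1 by ring; exact H).
  apply (is_RInt_comp_lin g), (is_RInt_Rmult_l _ _ _ (/ 2)) in Hs.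
  eapply is_RInt_ext_R; [|eapply is_RInt_eq_value; [|exact Hs]].
  - intros x _. unfold scal; simpl. unfold mult; simpl.
    replace (2 * x + -1) with (2 * x - 1) by ring. field.
  - field.
Qed.

(** * Polynomials in two variables and integration over the triangle *)

(* The basis functions divide by [lam e1 + lam e2], so they are polynomials only on the open
   triangle; identities between integrands are therefore only required there. *)
Definition interior_K (x y : R) : Prop := 0 < x /\ 0 < y /\ x + y < 1.

Lemma interior_K_inK x y : interior_K x y -> inK x y.
Proof. intros (? & ? & ?). red; lra. Qed.

(* [(c, i, j)] stands for the monomial [c x^i y^j]. *)
Definition monomials := list (R * nat * nat).

Definition eval2 (l : monomials) (x y : R) : R :=
  fold_right (fun '(c, i, j) acc => c * x ^ i * y ^ j + acc) 0 l.

Definition mul2 (l1 l2 : monomials) : monomials :=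
  flat_map (fun '(c, i, j) =>
    map (fun '(c', i', j') => (c * c', (i + i')%nat, (j + j')%nat)) l2) l1.

Definition scale2 (c : R) (l : monomials) : monomials := map (fun '(c', i, j) => (c * c', i, j)) l.

Definition swap2 (l : monomials) : monomials := map (fun '(c, i, j) => (c, j, i)) l.

Lemma eval2_app l1 l2 x y : eval2 (l1 ++ l2) x y = eval2 l1 x y + eval2 l2 x y.
Proof. induction l1 as [|[[c i] j] l IH]; simpl; [lra|]. rewrite IH. ring. Qed.

Lemma eval2_mul l1 l2 x y : eval2 (mul2 l1 l2) x y = eval2 l1 x y * eval2 l2 x y.
Proof.
  induction l1 as [|[[c i] j] l IH]; simpl; [ring|].
  unfold mul2 in *. simpl. rewrite eval2_app, IH.
  enough (eval2 (map (fun '(c', i', j') => (c * c', (i + i')%nat, (j + j')%nat)) l2) x y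
          = c * x ^ i * y ^ j * eval2 l2 x y) as -> by ring.
  clear IH. induction l2 as [|[[c' i'] j'] l2 IH2]; simpl; [ring|]. rewrite IH2, !pow_add. ring.
Qed.

Lemma eval2_scale c l x y : eval2 (scale2 c l) x y = c * eval2 l x y.
Proof. induction l as [|[[c' i] j] l IH]; simpl; [ring|]. rewrite IH. ring. Qed.

Lemma eval2_swap l x y : eval2 (swap2 l) x y = eval2 l y x.
Proof. induction l as [|[[c i] j] l IH]; simpl; [ring|]. rewrite IH. ring. Qed.

Definition is_poly2 (f : R -> R -> R) : Prop :=
  exists l, forall x y, interior_K x y -> f x y = eval2 l x y.

Lemma is_poly2_ext f g :
  (forall x y, interior_K x y -> f x y = g x y) -> is_poly2 f -> is_poly2 g.
Proof. intros H [l Hl]. exists l. intros. rewrite <- H by auto. auto. Qed.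

Lemma is_poly2_const c : is_poly2 (fun _ _ => c).
Proof. exists ((c, 0%nat, 0%nat) :: nil). intros; simpl; ring. Qed.

Lemma is_poly2_x : is_poly2 (fun x _ => x).
Proof. exists ((1, 1%nat, 0%nat) :: nil). intros; simpl; ring. Qed.

Lemma is_poly2_y : is_poly2 (fun _ y => y).
Proof. exists ((1, 0%nat, 1%nat) :: nil). intros; simpl; ring. Qed.

Lemma is_poly2_plus f g : is_poly2 f -> is_poly2 g -> is_poly2 (fun x y => f x y + g x y).
Proof. intros [l1 H1] [l2 H2]. exists (l1 ++ l2). intros. rewrite eval2_app, H1, H2; auto. Qed.

Lemma is_poly2_mult f g : is_poly2 f -> is_poly2 g -> is_poly2 (fun x y => f x y * g x y).
Proof. intros [l1 H1] [l2 H2]. exists (mul2 l1 l2). intros. rewrite eval2_mul, H1, H2; auto. Qed.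

Lemma is_poly2_scal c f : is_poly2 f -> is_poly2 (fun x y => c * f x y).
Proof. intros. apply is_poly2_mult; auto using is_poly2_const. Qed.

Lemma is_poly2_minus f g : is_poly2 f -> is_poly2 g -> is_poly2 (fun x y => f x y - g x y).
Proof.
  intros Hf Hg. eapply is_poly2_ext; [|apply (is_poly2_plus _ _ Hf (is_poly2_scal (-1) _ Hg))].
  intros; simpl; ring.
Qed.

Lemma is_poly2_pow f n : is_poly2 f -> is_poly2 (fun x y => f x y ^ n).
Proof.
  intros H. induction n as [|n IH].
  - exists ((1, 0%nat, 0%nat) :: nil). intros; simpl; ring.
  - apply (is_poly2_mult _ _ H IH).
Qed.

Lemma is_poly2_Rsum n (F : nat -> R -> R -> R) :
  (forall k, (k < n)%nat -> is_poly2 (F k)) -> is_poly2 (fun x y => Rsum n (fun k => F k x y)).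
Proof.
  induction n as [|n IH]; intros H; [exists nil; reflexivity|].
  eapply is_poly2_ext; [|apply is_poly2_plus; [apply IH; intros k Hk; apply H; lia | apply (H n); lia]].
  intros. rewrite Rsum_S. reflexivity.
Qed.

Ltac poly2 :=
  repeat first
    [ apply is_poly2_minus | apply is_poly2_plus | apply is_poly2_mult
    | apply is_poly2_pow | apply is_poly2_const | apply is_poly2_x | apply is_poly2_y ].

Definition int_K (f : R -> R -> R) : R :=
  RInt (fun x => RInt (fun y => f x y) 0 (1 - x)) 0 1.

Lemma L2sq_int_K f : L2sq f = int_K (fun x y => f x y ^ 2).
Proof. reflexivity. Qed.

(* [int_K x^i y^j = i! j! / (i + j + 2)!] *)
Definition int_K_monomials (l : monomials) : R :=
  fold_right (fun '(c, i, j) acc =>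
    c * INR (fact i) * INR (fact j) / INR (fact (i + j + 2)) + acc) 0 l.

Lemma int_K_monomials_app l1 l2 :
  int_K_monomials (l1 ++ l2) = int_K_monomials l1 + int_K_monomials l2.
Proof. induction l1 as [|[[c i] j] l IH]; simpl; [lra|]. rewrite IH. ring. Qed.

Lemma int_K_monomials_scale c l : int_K_monomials (scale2 c l) = c * int_K_monomials l.
Proof.
  induction l as [|[[c' i] j] l IH]; simpl; [ring|].
  rewrite IH. field. apply INR_fact_neq_0.
Qed.

Lemma int_K_monomials_swap l : int_K_monomials (swap2 l) = int_K_monomials l.
Proof.
  induction l as [|[[c i] j] l IH]; simpl; [reflexivity|].
  rewrite IH, (Nat.add_comm j i). field. apply INR_fact_neq_0.
Qed.

Lemma is_RInt_eval2_y l x b :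
  is_RInt (fun y => eval2 l x y) 0 b
    (fold_right (fun '(c, i, j) acc => c * x ^ i * (b ^ (S j) / INR (S j)) + acc) 0 l).
Proof.
  induction l as [|[[c i] j] l IH]; unfold eval2 in *; cbn [fold_right] in *; [apply is_RInt_zero|].
  apply is_RInt_Rplus; auto.
  apply is_RInt_ext_R with (f := fun y => (c * x ^ i) * (y - 0) ^ j).
  { intros; rewrite Rminus_0_r; ring. }
  apply is_RInt_Rmult_l. rewrite <- (Rminus_0_r b) at 2. apply is_RInt_pow_shift.
Qed.

Lemma ex_RInt_poly2_y f x : is_poly2 f -> 0 < x < 1 -> ex_RInt (fun y => f x y) 0 (1 - x).
Proof.
  intros [l Hl] Hx. eexists. eapply is_RInt_ext_R; [|apply (is_RInt_eval2_y l x (1 - x))].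
  intros y Hy. rewrite Rmin_0_l, Rmax_0_l in Hy by lra. symmetry. apply Hl. red; lra.
Qed.

Lemma is_RInt_int_K f l : (forall x y, interior_K x y -> f x y = eval2 l x y) ->
  is_RInt (fun x => RInt (fun y => f x y) 0 (1 - x)) 0 1 (int_K_monomials l).
Proof.
  intros Hf.
  apply is_RInt_ext_R with (f := fun x => fold_right (fun '(c, i, j) acc =>
     c * x ^ i * ((1 - x) ^ (S j) / INR (S j)) + acc) 0 l).
  { intros x Hx. rewrite Rmin_0_l, Rmax_0_l in Hx by lra. symmetry.
    rewrite (RInt_ext _ (fun y => eval2 l x y)).
    - apply is_RInt_unique, is_RInt_eval2_y.
    - intros y Hy. rewrite Rmin_0_l, Rmax_0_l in Hy by lra. apply Hf. red; lra. }
  clear Hf. induction l as [|[[c i] j] l IH]; cbn [fold_right int_K_monomials];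
    [apply is_RInt_zero|].
  apply is_RInt_Rplus; [|apply IH].
  apply is_RInt_ext_R with (f := fun x => (c / INR (S j)) * ((x - 0) ^ i * (1 - x) ^ (S j))).
  { intros. rewrite Rminus_0_r. field. apply not_0_INR; lia. }
  eapply is_RInt_eq_value; [|apply is_RInt_Rmult_l, is_RInt_beta].
  unfold beta_int. rewrite Rminus_0_r, pow1. replace (i + S j + 1)%nat with (i + j + 2)%nat by lia.
  rewrite INR_fact_S. field. split; [apply INR_fact_neq_0 | apply not_0_INR; lia].
Qed.

Lemma int_K_eq_monomials f l :
  (forall x y, interior_K x y -> f x y = eval2 l x y) -> int_K f = int_K_monomials l.
Proof. intros. apply is_RInt_unique, is_RInt_int_K; auto. Qed.

Lemma int_K_swap f : is_poly2 f -> int_K f = int_K (fun x y => f y x).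
Proof.
  intros [l Hl]. rewrite (int_K_eq_monomials f l Hl), (int_K_eq_monomials _ (swap2 l)).
  - symmetry. apply int_K_monomials_swap.
  - intros x y (? & ? & ?). rewrite eval2_swap. apply Hl. red; lra.
Qed.

Lemma is_RInt_eval2_shear l t :
  is_RInt (fun x => eval2 l x (t - x)) 0 t
    (fold_right (fun '(c, i, j) acc => c * beta_int (t - 0) i j + acc) 0 l).
Proof.
  induction l as [|[[c i] j] l IH]; unfold eval2 in *; cbn [fold_right] in *; [apply is_RInt_zero|].
  apply is_RInt_Rplus; auto.
  apply is_RInt_ext_R with (f := fun x => c * ((x - 0) ^ i * (t - x) ^ j)).
  { intros; rewrite Rminus_0_r; ring. }
  apply is_RInt_Rmult_l, is_RInt_beta.
Qed.

Lemma int_K_shear f : is_poly2 f ->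
  RInt (fun t => RInt (fun x => f x (t - x)) 0 t) 0 1 = int_K f.
Proof.
  intros [l Hf]. rewrite (int_K_eq_monomials f l Hf). apply is_RInt_unique.
  apply is_RInt_ext_R with (f := fun t => fold_right (fun '(c, i, j) acc =>
     c * beta_int (t - 0) i j + acc) 0 l).
  { intros t Ht. rewrite Rmin_0_l, Rmax_0_l in Ht by lra. symmetry.
    rewrite (RInt_ext _ (fun x => eval2 l x (t - x))).
    - apply is_RInt_unique, is_RInt_eval2_shear.
    - intros x Hx. rewrite Rmin_0_l, Rmax_0_l in Hx by lra. apply Hf. red; lra. }
  clear Hf. induction l as [|[[c i] j] l IH]; cbn [fold_right int_K_monomials];
    [apply is_RInt_zero|].
  apply is_RInt_Rplus; [|apply IH].
  apply is_RInt_ext_R with (f := fun t =>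
    (c * INR (fact i) * INR (fact j) / INR (fact (i + j + 1))) * (t - 0) ^ (i + j + 1)).
  { intros. unfold beta_int. field. apply INR_fact_neq_0. }
  eapply is_RInt_eq_value; [|apply is_RInt_Rmult_l, is_RInt_pow_shift].
  rewrite Rminus_0_r, pow1. replace (i + j + 2)%nat with (S (i + j + 1)) by lia.
  rewrite INR_fact_S. field. split; [apply INR_fact_neq_0 | apply not_0_INR; lia].
Qed.

Lemma int_K_ext f g :
  (forall x y, interior_K x y -> f x y = g x y) -> is_poly2 f -> int_K f = int_K g.
Proof.
  intros H [l Hl]. rewrite (int_K_eq_monomials f l), (int_K_eq_monomials g l); auto.
  intros; rewrite <- H; auto.
Qed.

Lemma int_K_plus f g : is_poly2 f -> is_poly2 g ->
  int_K (fun x y => f x y + g x y) = int_K f + int_K g.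
Proof.
  intros [l1 H1] [l2 H2].
  rewrite (int_K_eq_monomials f l1), (int_K_eq_monomials g l2),
    (int_K_eq_monomials _ (l1 ++ l2)); auto.
  - apply int_K_monomials_app.
  - intros. rewrite eval2_app, H1, H2; auto.
Qed.

Lemma int_K_scal c f : is_poly2 f -> int_K (fun x y => c * f x y) = c * int_K f.
Proof.
  intros [l H]. rewrite (int_K_eq_monomials f l H), (int_K_eq_monomials _ (scale2 c l)).
  - apply int_K_monomials_scale.
  - intros. rewrite eval2_scale, H; auto.
Qed.

Lemma int_K_Rsum n (F : nat -> R -> R -> R) : (forall k, (k < n)%nat -> is_poly2 (F k)) ->
  int_K (fun x y => Rsum n (fun k => F k x y)) = Rsum n (fun k => int_K (F k)).
Proof.
  induction n as [|n IH]; intros H.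
  - apply (int_K_eq_monomials _ nil). reflexivity.
  - rewrite Rsum_S, <- IH by (intros; apply H; lia).
    rewrite <- int_K_plus by (try apply is_poly2_Rsum; intros; apply H; lia).
    apply int_K_ext; [intros; apply Rsum_S|].
    apply is_poly2_Rsum. intros; apply H; lia.
Qed.

Lemma int_K_const c : int_K (fun _ _ => c) = c / 2.
Proof. rewrite (int_K_eq_monomials _ ((c, 0%nat, 0%nat) :: nil)); [simpl; field | intros; simpl; ring]. Qed.

Lemma int_K_ge0 f : is_poly2 f -> (forall x y, interior_K x y -> 0 <= f x y) -> 0 <= int_K f.
Proof.
  intros Hp Hf. pose proof Hp as [l Hl].
  apply RInt_ge_0; [lra | eexists; apply (is_RInt_int_K _ l Hl) |].
  intros x Hx. apply RInt_ge_0; [lra | apply ex_RInt_poly2_y; auto |].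
  intros y Hy. apply Hf. red; lra.
Qed.

Lemma int_K_le f g : is_poly2 f -> is_poly2 g ->
  (forall x y, interior_K x y -> f x y <= g x y) -> int_K f <= int_K g.
Proof.
  intros Hf Hg H.
  assert (Hdiff : 0 <= int_K (fun x y => g x y + (-1) * f x y)).
  { apply int_K_ge0; [poly2; auto | intros x y Hxy; specialize (H x y Hxy); lra]. }
  rewrite int_K_plus, int_K_scal in Hdiff by (auto; apply is_poly2_scal; auto). lra.
Qed.

(** * Polynomials in one variable *)

(* [(c, k)] stands for [c (1 + x)^k]: the Jacobi weight vanishes to order [b] at [-1], so its
   moments against powers of [1 + x] are beta integrals. *)
Definition upoly := list (R * nat).

Definition eval1 (l : upoly) (x : R) : R :=
  fold_right (fun '(c, k) acc => c * (1 + x) ^ k + acc) 0 l.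

Definition deg1_le (d : nat) (l : upoly) : Prop := List.Forall (fun t => (snd t <= d)%nat) l.

Definition coef1 (d : nat) (l : upoly) : R :=
  fold_right (fun '(c, k) acc => (if (k =? d)%nat then c else 0) + acc) 0 l.

Definition mul1 (l1 l2 : upoly) : upoly :=
  flat_map (fun '(c, k) => map (fun '(c', k') => (c * c', (k + k')%nat)) l2) l1.

Lemma eval1_app l1 l2 x : eval1 (l1 ++ l2) x = eval1 l1 x + eval1 l2 x.
Proof. induction l1 as [|[c k] l IH]; simpl; [lra|]. rewrite IH. ring. Qed.

Lemma eval1_mul l1 l2 x : eval1 (mul1 l1 l2) x = eval1 l1 x * eval1 l2 x.
Proof.
  induction l1 as [|[c k] l IH]; simpl; [ring|].
  unfold mul1 in *. simpl. rewrite eval1_app, IH.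
  enough (eval1 (map (fun '(c', k') => (c * c', (k + k')%nat)) l2) x
          = c * (1 + x) ^ k * eval1 l2 x) as -> by ring.
  clear IH. induction l2 as [|[c' k'] l2 IH2]; simpl; [ring|]. rewrite IH2, !pow_add. ring.
Qed.

Lemma coef1_app d l1 l2 : coef1 d (l1 ++ l2) = coef1 d l1 + coef1 d l2.
Proof. induction l1 as [|[c k] l IH]; simpl; [lra|]. rewrite IH. ring. Qed.

Lemma coef1_above d l : deg1_le d l -> coef1 (S d) l = 0.
Proof.
  induction l as [|[c k] l IH]; intros H; simpl; [ring|]. inversion H; subst. simpl in *.
  destruct (Nat.eqb_spec k (S d)); [lia|]. rewrite IH; auto. ring.
Qed.

Lemma deg1_le_mono d d' l : (d <= d')%nat -> deg1_le d l -> deg1_le d' l.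
Proof. intros Hd H. eapply Forall_impl; [|apply H]. intros; simpl in *; lia. Qed.

Lemma deg1_le_mul d1 d2 l1 l2 : deg1_le d1 l1 -> deg1_le d2 l2 -> deg1_le (d1 + d2) (mul1 l1 l2).
Proof.
  intros H1 H2. induction l1 as [|[c k] l IH]; [constructor|].
  inversion H1; subst. unfold mul1. simpl. apply Forall_app. split.
  - apply Forall_map. eapply Forall_impl; [|apply H2]. intros [c' k']; simpl in *. lia.
  - apply IH; auto.
Qed.

Lemma coef1_mul d1 d2 l1 l2 : deg1_le d1 l1 -> deg1_le d2 l2 ->
  coef1 (d1 + d2) (mul1 l1 l2) = coef1 d1 l1 * coef1 d2 l2.
Proof.
  intros H1 H2. induction l1 as [|[c k] l IH]; simpl; [ring|].
  inversion H1; subst. simpl in *. unfold mul1 in *. simpl. rewrite coef1_app, IH by auto.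
  enough (coef1 (d1 + d2) (map (fun '(c', k') => (c * c', (k + k')%nat)) l2)
          = (if (k =? d1)%nat then c else 0) * coef1 d2 l2) as -> by ring.
  clear IH. induction l2 as [|[c' k'] l2 IH2]; simpl; [ring|]. inversion H2; subst. simpl in *.
  rewrite IH2 by auto.
  destruct (Nat.eqb_spec (k + k') (d1 + d2)), (Nat.eqb_spec k d1), (Nat.eqb_spec k' d2);
    try lia; ring.
Qed.

(* The coefficient [e] of [(1 + x)^d] is also the coefficient of [x^d]. *)
Definition is_poly1 (d : nat) (e : R) (f : R -> R) : Prop :=
  exists l, deg1_le d l /\ coef1 d l = e /\ forall x, f x = eval1 l x.

Lemma is_poly1_ext d e e' f g :
  (forall x, f x = g x) -> e = e' -> is_poly1 d e f -> is_poly1 d e' g.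
Proof. intros H <- (l & H1 & H2 & H3). exists l. repeat split; auto. intros; rewrite <- H; auto. Qed.

Lemma is_poly1_const c : is_poly1 0 c (fun _ => c).
Proof. exists ((c, 0%nat) :: nil). repeat split; [repeat constructor | simpl; ring | intros; simpl; ring]. Qed.

Lemma is_poly1_1px : is_poly1 1 1 (fun x => 1 + x).
Proof. exists ((1, 1%nat) :: nil). repeat split; [repeat constructor | simpl; ring | intros; simpl; ring]. Qed.

Lemma is_poly1_plus d e1 e2 f g :
  is_poly1 d e1 f -> is_poly1 d e2 g -> is_poly1 d (e1 + e2) (fun x => f x + g x).
Proof.
  intros (l1 & A1 & B1 & C1) (l2 & A2 & B2 & C2). exists (l1 ++ l2). repeat split.
  - apply Forall_app; auto.
  - rewrite coef1_app; congruence.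
  - intros; rewrite eval1_app, C1, C2; auto.
Qed.

Lemma is_poly1_mult d1 d2 e1 e2 f g : is_poly1 d1 e1 f -> is_poly1 d2 e2 g ->
  is_poly1 (d1 + d2) (e1 * e2) (fun x => f x * g x).
Proof.
  intros (l1 & A1 & B1 & C1) (l2 & A2 & B2 & C2). exists (mul1 l1 l2). repeat split.
  - apply deg1_le_mul; auto.
  - rewrite coef1_mul; congruence.
  - intros; rewrite eval1_mul, C1, C2; auto.
Qed.

Lemma is_poly1_scal d c e f : is_poly1 d e f -> is_poly1 d (c * e) (fun x => c * f x).
Proof. intros H. apply (is_poly1_mult 0 d c e _ _ (is_poly1_const c) H). Qed.

Lemma is_poly1_raise d e f : is_poly1 d e f -> is_poly1 (S d) 0 f.
Proof.
  intros (l & A & B & C). exists l. repeat split; auto.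
  - eapply deg1_le_mono; [|apply A]; lia.
  - apply coef1_above; auto.
Qed.

Lemma is_poly1_pow d e f n : is_poly1 d e f -> is_poly1 (d * n) (e ^ n) (fun x => f x ^ n).
Proof.
  intros H. induction n as [|n IH].
  - rewrite Nat.mul_0_r. apply is_poly1_const.
  - rewrite Nat.mul_succ_r, Nat.add_comm. apply (is_poly1_mult _ _ _ _ _ _ H IH).
Qed.

Lemma is_poly1_Rsum n d (F : nat -> R -> R) (e : nat -> R) :
  (forall k, (k < n)%nat -> is_poly1 d (e k) (F k)) ->
  is_poly1 d (Rsum n e) (fun x => Rsum n (fun k => F k x)).
Proof.
  induction n as [|n IH]; intros H.
  - exists nil. repeat split; constructor.
  - eapply is_poly1_ext; [intros; symmetry; apply Rsum_S | symmetry; apply Rsum_S |].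
    apply is_poly1_plus; [apply IH; intros k Hk | ]; apply H; lia.
Qed.

Lemma is_poly1_continuous d e f x : is_poly1 d e f -> continuous f x.
Proof.
  intros (l & _ & _ & H). eapply continuous_ext; [intros; symmetry; apply H|].
  clear H. induction l as [|[c k] l IH]; [apply continuous_const|].
  apply (continuous_plus (fun x => c * (1 + x) ^ k) (eval1 l)); auto.
  apply (ex_derive_continuous (fun x => c * (1 + x) ^ k)). auto_derive. auto.
Qed.

(** * Jacobi polynomials *)

Lemma binomial_C_n_0 n : Binomial.C n 0 = 1.
Proof.
  unfold Binomial.C. rewrite Nat.sub_0_r. simpl (fact 0). simpl INR.
  field. apply INR_fact_neq_0.
Qed.

Lemma binomial_C_n_n n : Binomial.C n n = 1.
Proof.
  unfold Binomial.C. rewrite Nat.sub_diag. simpl (fact 0). simpl INR.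
  field. apply INR_fact_neq_0.
Qed.

Definition jacobi_lead (a b n : nat) : R :=
  Rsum (S n) (fun s => Binomial.C (n + a) (n - s) * Binomial.C (n + b) s * (/ 2) ^ n).

Lemma jacobi_lead_pos a b n : 0 < jacobi_lead a b n.
Proof.
  unfold jacobi_lead. rewrite Rsum_shift, binomial_C_n_0, Nat.sub_0_r.
  assert (0 <= Rsum n (fun i => Binomial.C (n + a) (n - S i) * Binomial.C (n + b) (S i) * (/ 2) ^ n)).
  { apply Rsum_nonneg. intros. unfold Binomial.C.
    repeat apply Rmult_le_pos; try (apply Rlt_le, Rinv_0_lt_compat); try apply pos_INR;
      try (apply Rmult_lt_0_compat; apply INR_fact_lt_0); apply pow_le; lra. }
  assert (0 < Binomial.C (n + a) n * 1 * (/ 2) ^ n); [|lra].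
  unfold Binomial.C. rewrite Rmult_1_r. apply Rmult_lt_0_compat; [|apply pow_lt; lra].
  apply Rdiv_lt_0_compat; [|apply Rmult_lt_0_compat]; apply INR_fact_lt_0.
Qed.

Lemma is_poly1_jacobi a b n : is_poly1 n (jacobi_lead a b n) (jacobiP a b n).
Proof.
  unfold jacobiP, jacobi_lead. apply is_poly1_Rsum. intros s Hs.
  assert (Hm : is_poly1 1 (/ 2) (fun x => (x - 1) / 2)).
  { eapply is_poly1_ext; [| | apply (is_poly1_plus _ _ _ _ _ (is_poly1_scal _ (/ 2) _ _ is_poly1_1px)
                                      (is_poly1_raise _ _ _ (is_poly1_const (-1))))].
    - intros; simpl; field.
    - ring. }
  assert (Hp : is_poly1 1 (/ 2) (fun x => (x + 1) / 2)).
  { eapply is_poly1_ext; [| | apply (is_poly1_scal _ (/ 2) _ _ is_poly1_1px)]; [intros; simpl; field | ring]. }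
  pose proof (is_poly1_mult _ _ _ _ _ _ (is_poly1_pow _ _ _ s Hm) (is_poly1_pow _ _ _ (n - s) Hp)) as P.
  replace (1 * s + 1 * (n - s))%nat with n in P by lia.
  eapply is_poly1_ext;
    [| | apply (is_poly1_scal _ (Binomial.C (n + a) (n - s) * Binomial.C (n + b) s) _ _ P)].
  - intros; simpl; ring.
  - rewrite <- pow_add. replace (s + (n - s))%nat with n by lia. ring.
Qed.

Definition fdiff (n : nat) (g : nat -> R) : R :=
  Rsum (S n) (fun s => (-1) ^ s * Binomial.C n s * g s).

Fixpoint falling (x : R) (k : nat) : R :=
  match k with 0%nat => 1 | S k => falling x k * (x - INR k) end.

Lemma fdiff_ext n g h : (forall s, (s <= n)%nat -> g s = h s) -> fdiff n g = fdiff n h.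
Proof. intros H. apply Rsum_ext. intros. rewrite H by lia. reflexivity. Qed.

Lemma fdiff_scal n c g : fdiff n (fun s => c * g s) = c * fdiff n g.
Proof. unfold fdiff. rewrite <- Rsum_scal. apply Rsum_ext; intros; ring. Qed.

Lemma fdiff_minus n g h : fdiff n (fun s => g s - h s) = fdiff n g - fdiff n h.
Proof.
  unfold fdiff.
  replace (Rsum (S n) (fun s => (-1) ^ s * Binomial.C n s * g s)
           - Rsum (S n) (fun s => (-1) ^ s * Binomial.C n s * h s))
    with (Rsum (S n) (fun s => (-1) ^ s * Binomial.C n s * g s)
          + Rsum (S n) (fun s => (-1) * ((-1) ^ s * Binomial.C n s * h s)))
    by (rewrite Rsum_scal; ring).
  rewrite <- Rsum_plus. apply Rsum_ext; intros; ring.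
Qed.

Lemma fdiff_S n g : fdiff (S n) g = fdiff n g - fdiff n (fun s => g (S s)).
Proof.
  unfold fdiff. rewrite (Rsum_shift (S n)), Rsum_S.
  rewrite (Rsum_shift n (fun s => (-1) ^ s * Binomial.C n s * g s)).
  rewrite (Rsum_S n (fun s => (-1) ^ s * Binomial.C n s * g (S s))).
  rewrite !binomial_C_n_0, !binomial_C_n_n.
  assert (E : Rsum n (fun i => (-1) ^ S i * Binomial.C (S n) (S i) * g (S i)) =
              Rsum n (fun i => (-1) ^ S i * Binomial.C n (S i) * g (S i))
              + Rsum n (fun s => (-1) * ((-1) ^ s * Binomial.C n s * g (S s)))).
  { rewrite <- Rsum_plus. apply Rsum_ext. intros i Hi.
    rewrite <- Binomial.pascal by lia. simpl. ring. }
  rewrite E, Rsum_scal. simpl pow. ring.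
Qed.

Lemma falling_S x k : falling x (S k) = x * falling (x - 1) k.
Proof.
  revert x. induction k as [|k IH]; intros x; [simpl; ring|].
  change (falling x (S (S k))) with (falling x (S k) * (x - INR (S k))). rewrite IH.
  change (falling (x - 1) (S k)) with (falling (x - 1) k * (x - 1 - INR k)). rewrite S_INR. ring.
Qed.

Lemma falling_diff y k : falling y (S k) - falling (y - 1) (S k) = INR (S k) * falling (y - 1) k.
Proof.
  rewrite falling_S.
  change (falling (y - 1) (S k)) with (falling (y - 1) k * (y - 1 - INR k)). rewrite S_INR. ring.
Qed.

Lemma fdiff_falling_step n N k :
  fdiff n (fun s => falling (N - INR s) (S k) - falling (N - INR (S s)) (S k))
  = INR (S k) * fdiff n (fun s => falling ((N - 1) - INR s) k).
Proof.
  rewrite <- fdiff_scal. apply fdiff_ext. intros s _. rewrite (S_INR s).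
  replace (N - (INR s + 1)) with ((N - INR s) - 1) by ring. rewrite falling_diff.
  f_equal. f_equal. ring.
Qed.

(* The [n]-th difference kills polynomials of degree [< n] and maps [x^n] to [n!]. *)
Lemma fdiff_falling_lt n N k : (k < n)%nat -> fdiff n (fun s => falling (N - INR s) k) = 0.
Proof.
  revert N k. induction n as [|n IH]; intros N k Hk; [lia|].
  rewrite fdiff_S, <- fdiff_minus. destruct k as [|k].
  - apply Rsum_zero. intros. simpl. ring.
  - rewrite fdiff_falling_step, IH by lia. ring.
Qed.

Lemma fdiff_falling_eq n N : fdiff n (fun s => falling (N - INR s) n) = INR (fact n).
Proof.
  revert N. induction n as [|n IH]; intros N.
  - unfold fdiff. rewrite Rsum_S, Rsum_0. simpl. rewrite binomial_C_n_0. ring.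
  - rewrite fdiff_S, <- fdiff_minus, fdiff_falling_step, IH, INR_fact_S. reflexivity.
Qed.

Lemma INR_fact_falling m k : INR (fact (m + k)) = INR (fact m) * falling (INR (m + k)) k.
Proof.
  revert m. induction k as [|k IH]; intros m.
  - rewrite Nat.add_0_r. simpl. ring.
  - rewrite falling_S. replace (m + S k)%nat with (S (m + k)) by lia.
    rewrite INR_fact_S, IH. replace (INR (S (m + k)) - 1) with (INR (m + k)) by (rewrite S_INR; ring).
    ring.
Qed.

Definition jacobi_weight (a b : nat) (x : R) : R := (1 - x) ^ a * (1 + x) ^ b.

Definition jacobi_moment_const (a b n k : nat) : R :=
  2 ^ (a + b + n + k + 1) / 2 ^ n * INR (fact (n + a)) * INR (fact (n + b)) /
  (INR (fact n) * INR (fact (a + b + n + k + 1))).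

(* Closed form of the moment [int_{-1}^1 w P_n (1 + x)^k]. *)
Definition jacobi_moment (a b n k : nat) : R :=
  jacobi_moment_const a b n k * fdiff n (fun s => falling (INR (b + n + k) - INR s) k).

Lemma jacobi_moment_term a b n k s x : (s <= n)%nat ->
  jacobi_weight a b x * (Binomial.C (n + a) (n - s) * Binomial.C (n + b) s
    * ((x - 1) / 2) ^ s * ((x + 1) / 2) ^ (n - s)) * (1 + x) ^ k
  = (Binomial.C (n + a) (n - s) * Binomial.C (n + b) s * (-1) ^ s / 2 ^ n)
    * ((x - -1) ^ (b + (n - s) + k) * (1 - x) ^ (a + s)).
Proof.
  intros Hs. unfold jacobi_weight.
  replace ((x - 1) / 2) with ((-1) * (1 - x) * / 2) by field.
  replace ((x + 1) / 2) with ((1 + x) * / 2) by field.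
  replace (x - -1) with (1 + x) by ring.
  rewrite !Rpow_mult_distr, !pow_add.
  replace (2 ^ n) with (2 ^ s * 2 ^ (n - s)) by (rewrite <- pow_add; f_equal; lia).
  rewrite !pow_inv. field. split; apply pow_nonzero; lra.
Qed.

Lemma jacobi_moment_term_value a b n k s : (s <= n)%nat ->
  Binomial.C (n + a) (n - s) * Binomial.C (n + b) s * (-1) ^ s / 2 ^ n
    * beta_int (1 - -1) (b + (n - s) + k) (a + s)
  = jacobi_moment_const a b n k * ((-1) ^ s * Binomial.C n s * falling (INR (b + n + k) - INR s) k).
Proof.
  intros Hs. unfold Binomial.C, beta_int, jacobi_moment_const.
  replace (1 - -1) with 2 by ring.
  replace (b + (n - s) + k + (a + s) + 1)%nat with (a + b + n + k + 1)%nat by lia.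
  replace (n + a - (n - s))%nat with (a + s)%nat by lia.
  replace (n + b - s)%nat with (b + (n - s))%nat by lia.
  rewrite (INR_fact_falling (b + (n - s)) k).
  replace (INR (b + (n - s) + k)) with (INR (b + n + k) - INR s)
    by (rewrite !plus_INR, minus_INR by lia; ring).
  pose proof (INR_fact_neq_0 (n - s)). pose proof (INR_fact_neq_0 s).
  pose proof (INR_fact_neq_0 (a + s)). pose proof (INR_fact_neq_0 (b + (n - s))).
  pose proof (INR_fact_neq_0 n). pose proof (INR_fact_neq_0 (a + b + n + k + 1)).
  field. repeat split; auto; apply pow_nonzero; lra.
Qed.

Lemma is_RInt_jacobi_moment a b n k :
  is_RInt (fun x => jacobi_weight a b x * jacobiP a b n x * (1 + x) ^ k) (-1) 1
    (jacobi_moment a b n k).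
Proof.
  apply is_RInt_ext_R with (f := fun x => Rsum (S n) (fun s =>
     (Binomial.C (n + a) (n - s) * Binomial.C (n + b) s * (-1) ^ s / 2 ^ n)
     * ((x - -1) ^ (b + (n - s) + k) * (1 - x) ^ (a + s)))).
  { intros x _. unfold jacobiP. rewrite Rsum_scal_lr.
    apply Rsum_ext. intros s Hs. symmetry. apply jacobi_moment_term. lia. }
  unfold jacobi_moment, fdiff. rewrite <- Rsum_scal.
  apply is_RInt_Rsum. intros s Hs.
  rewrite <- jacobi_moment_term_value by lia. apply is_RInt_Rmult_l, is_RInt_beta.
Qed.

Lemma jacobi_moment_lt a b n k : (k < n)%nat -> jacobi_moment a b n k = 0.
Proof. intros. unfold jacobi_moment. rewrite fdiff_falling_lt by auto. ring. Qed.

Lemma jacobi_moment_diag_pos a b n : 0 < jacobi_moment a b n n.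
Proof.
  unfold jacobi_moment, jacobi_moment_const. rewrite fdiff_falling_eq.
  pose proof (INR_fact_lt_0 n). pose proof (INR_fact_lt_0 (n + a)).
  pose proof (INR_fact_lt_0 (n + b)). pose proof (INR_fact_lt_0 (a + b + n + n + 1)).
  assert (0 < 2 ^ (a + b + n + n + 1)) by (apply pow_lt; lra).
  assert (0 < 2 ^ n) by (apply pow_lt; lra).
  apply Rmult_lt_0_compat; auto.
  unfold Rdiv. repeat apply Rmult_lt_0_compat; auto; apply Rinv_0_lt_compat; auto.
  apply Rmult_lt_0_compat; auto.
Qed.

Definition jacobi_moments (a b n : nat) (l : upoly) : R :=
  fold_right (fun '(c, k) acc => c * jacobi_moment a b n k + acc) 0 l.

Lemma is_RInt_jacobi_upoly a b n l :
  is_RInt (fun x => jacobi_weight a b x * jacobiP a b n x * eval1 l x) (-1) 1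
    (jacobi_moments a b n l).
Proof.
  induction l as [|[c k] l IH]; unfold eval1 in *; cbn [fold_right jacobi_moments] in *.
  - eapply is_RInt_ext_R; [|apply is_RInt_zero]. intros; simpl; ring.
  - apply is_RInt_ext_R with (f := fun x => c * (jacobi_weight a b x * jacobiP a b n x * (1 + x) ^ k)
      + jacobi_weight a b x * jacobiP a b n x
        * fold_right (fun '(c, k) acc => c * (1 + x) ^ k + acc) 0 l).
    { intros; ring. }
    apply is_RInt_Rplus; auto. apply is_RInt_Rmult_l, is_RInt_jacobi_moment.
Qed.

Lemma jacobi_moments_low a b n d l : deg1_le d l -> (d < n)%nat -> jacobi_moments a b n l = 0.
Proof.
  intros H Hd. induction l as [|[c k] l IH]; simpl; auto.
  inversion H; subst. simpl in *. rewrite IH, jacobi_moment_lt by (auto; lia). ring.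
Qed.

Lemma jacobi_moments_top a b n l :
  deg1_le n l -> jacobi_moments a b n l = coef1 n l * jacobi_moment a b n n.
Proof.
  intros H. induction l as [|[c k] l IH]; simpl; [ring|].
  inversion H; subst. simpl in *. rewrite IH by auto.
  destruct (Nat.eqb_spec k n) as [->|]; [ring|]. rewrite jacobi_moment_lt by lia. ring.
Qed.

Lemma is_RInt_jacobi_orth_deg_lt a b n d e q : is_poly1 d e q -> (d < n)%nat ->
  is_RInt (fun x => jacobi_weight a b x * jacobiP a b n x * q x) (-1) 1 0.
Proof.
  intros (l & H1 & _ & H3) Hd.
  eapply is_RInt_ext_R; [|eapply is_RInt_eq_value; [|apply (is_RInt_jacobi_upoly a b n l)]].
  - intros. rewrite H3. reflexivity.
  - eapply jacobi_moments_low; eauto.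
Qed.

Lemma is_RInt_jacobi_top a b n e q : is_poly1 n e q ->
  is_RInt (fun x => jacobi_weight a b x * jacobiP a b n x * q x) (-1) 1
    (e * jacobi_moment a b n n).
Proof.
  intros (l & H1 & H2 & H3).
  eapply is_RInt_ext_R; [|eapply is_RInt_eq_value; [|apply (is_RInt_jacobi_upoly a b n l)]].
  - intros. rewrite H3. reflexivity.
  - rewrite jacobi_moments_top; auto. congruence.
Qed.

Definition jacobi_norm2 (a b n : nat) : R := jacobi_lead a b n * jacobi_moment a b n n.

Lemma jacobi_norm2_pos a b n : 0 < jacobi_norm2 a b n.
Proof. apply Rmult_lt_0_compat; [apply jacobi_lead_pos | apply jacobi_moment_diag_pos]. Qed.

Lemma is_RInt_jacobi_gram a b n m :
  is_RInt (fun x => jacobi_weight a b x * jacobiP a b n x * jacobiP a b m x) (-1) 1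
    (if (n =? m)%nat then jacobi_norm2 a b n else 0).
Proof.
  destruct (Nat.eqb_spec n m) as [<-|Hnm].
  - apply is_RInt_jacobi_top, is_poly1_jacobi.
  - destruct (Nat.lt_ge_cases m n).
    + eapply is_RInt_jacobi_orth_deg_lt; [apply is_poly1_jacobi | auto].
    + eapply is_RInt_ext_R; [|eapply (is_RInt_jacobi_orth_deg_lt a b m n);
                                [apply (is_poly1_jacobi a b n) | lia]].
      intros; simpl; ring.
Qed.

(* Binomial coefficients by Pascal's rule, without the side condition [k <= n]. *)
Fixpoint binomR (n k : nat) : R :=
  match n, k with
  | _, 0%nat => 1
  | 0%nat, S _ => 0
  | S n', S k' => binomR n' k' + binomR n' k
  end.

Lemma binomR_0 n : binomR n 0 = 1.
Proof. destruct n; reflexivity. Qed.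

Lemma binomR_above n k : (n < k)%nat -> binomR n k = 0.
Proof.
  revert k. induction n as [|n IH]; intros k Hk; destruct k; try lia; simpl; auto.
  rewrite !IH by lia. ring.
Qed.

Lemma binomR_C n k : (k <= n)%nat -> binomR n k = Binomial.C n k.
Proof.
  revert k. induction n as [|n IH]; intros [|k] Hk; simpl; try rewrite binomial_C_n_0; auto; [lia|].
  destruct (Nat.eq_dec k n) as [->|].
  - rewrite (binomR_above n (S n)), IH, !binomial_C_n_n by lia. ring.
  - rewrite !IH by lia. apply Binomial.pascal. lia.
Qed.

Lemma binomR_vandermonde p q k :
  Rsum (S k) (fun s => binomR p s * binomR q (k - s)) = binomR (p + q) k.
Proof.
  revert q k. induction p as [|p IH]; intros q k.
  - rewrite Rsum_shift, Rsum_zero, Nat.sub_0_r, Nat.add_0_l, binomR_0; [ring|].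
    intros i _. simpl (binomR 0 (S i)). ring.
  - destruct k as [|k]; [rewrite Rsum_S, Rsum_0; simpl; rewrite !binomR_0; ring|].
    rewrite Rsum_shift, binomR_0, Nat.sub_0_r.
    replace (Rsum (S k) (fun i => binomR (S p) (S i) * binomR q (S k - S i)))
      with (Rsum (S k) (fun i => binomR p i * binomR q (k - i))
            + Rsum (S k) (fun i => binomR p (S i) * binomR q (k - i)))
      by (rewrite <- Rsum_plus; apply Rsum_ext; intros; simpl; ring).
    assert (E : binomR (p + q) (S k) = binomR q (S k)
                  + Rsum (S k) (fun i => binomR p (S i) * binomR q (k - i))).
    { rewrite <- IH, Rsum_shift, binomR_0, Nat.sub_0_r, Rmult_1_l. reflexivity. }
    rewrite IH. simpl (binomR (S p + q) (S k)). rewrite E. ring.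
Qed.

Lemma sum_binomial_sq m :
  Rsum (S m) (fun s => Binomial.C m (m - s) * Binomial.C m s) = Binomial.C (m + m) m.
Proof.
  rewrite <- binomR_C, <- binomR_vandermonde by lia.
  apply Rsum_ext. intros s Hs. rewrite !binomR_C by lia. ring.
Qed.

Lemma legendre_norm2 m : jacobi_norm2 0 0 m = 2 / (2 * INR m + 1).
Proof.
  unfold jacobi_norm2, jacobi_lead, jacobi_moment, jacobi_moment_const.
  rewrite fdiff_falling_eq, !Nat.add_0_r.
  rewrite <- (Rsum_ext (S m) (fun s => (/ 2) ^ m * (Binomial.C m (m - s) * Binomial.C m s)))
    by (intros; ring).
  rewrite Rsum_scal, sum_binomial_sq. unfold Binomial.C. replace (m + m - m)%nat with m by lia.
  replace (0 + m + m + 1)%nat with (S (m + m)) by lia.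
  rewrite INR_fact_S, S_INR, plus_INR.
  replace (2 ^ S (m + m)) with (2 * 2 ^ m * 2 ^ m) by (simpl; rewrite pow_add; ring).
  pose proof (INR_fact_neq_0 m). pose proof (INR_fact_neq_0 (m + m)). pose proof (pos_INR m).
  rewrite pow_inv. field. repeat split; try lra. apply pow_nonzero; lra.
Qed.

Lemma legendre_norm2_le m : jacobi_norm2 0 0 m <= 2.
Proof.
  rewrite legendre_norm2. pose proof (pos_INR m).
  apply Rmult_le_reg_r with (2 * INR m + 1); [lra|].
  unfold Rdiv. rewrite Rmult_assoc, Rinv_l by lra. nra.
Qed.

(** * Integrated Legendre polynomials *)

Definition moment1 (l : upoly) (k : nat) : R :=
  fold_right (fun '(c, j) acc => c * (2 ^ (S (j + k)) / INR (S (j + k))) + acc) 0 l.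

Lemma is_RInt_moment1 l k : is_RInt (fun x => eval1 l x * (1 + x) ^ k) (-1) 1 (moment1 l k).
Proof.
  induction l as [|[c j] l IH]; unfold eval1 in *; cbn [fold_right moment1] in *.
  - eapply is_RInt_ext_R; [|apply is_RInt_zero]. intros; simpl; ring.
  - apply is_RInt_ext_R with (f := fun x => c * (x - -1) ^ (j + k)
      + fold_right (fun '(c, k) acc => c * (1 + x) ^ k + acc) 0 l * (1 + x) ^ k).
    { intros. rewrite pow_add. replace (x - -1) with (1 + x) by ring. ring. }
    apply is_RInt_Rplus; auto. apply is_RInt_Rmult_l.
    eapply is_RInt_eq_value; [|apply is_RInt_pow_shift]. f_equal. f_equal. ring.
Qed.

Lemma is_RInt_eval1_mult lA lB :
  is_RInt (fun x => eval1 lA x * eval1 lB x) (-1) 1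
    (fold_right (fun '(c, k) acc => c * moment1 lA k + acc) 0 lB).
Proof.
  induction lB as [|[c k] l IH]; cbn [fold_right].
  - eapply is_RInt_ext_R; [|apply is_RInt_zero]. intros; unfold eval1; simpl; ring.
  - apply is_RInt_ext_R with (f := fun x => c * (eval1 lA x * (1 + x) ^ k) + eval1 lA x * eval1 l x).
    { intros. change (eval1 ((c, k) :: l) x) with (c * (1 + x) ^ k + eval1 l x). ring. }
    apply is_RInt_Rplus; auto. apply is_RInt_Rmult_l, is_RInt_moment1.
Qed.

Definition antideriv1 (l : upoly) : upoly := map (fun '(c, j) => (c / INR (S j), S j)) l.

Lemma is_RInt_antideriv1 l z : is_RInt (eval1 l) (-1) z (eval1 (antideriv1 l) z).
Proof.
  induction l as [|[c j] l IH]; unfold eval1 in *; cbn [fold_right antideriv1 map] in *.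
  - eapply is_RInt_ext_R; [|apply is_RInt_zero]. intros; simpl; ring.
  - apply is_RInt_Rplus; auto.
    apply is_RInt_ext_R with (f := fun x => c * (x - -1) ^ j).
    { intros. replace (x - -1) with (1 + x) by ring. ring. }
    eapply is_RInt_eq_value; [|apply is_RInt_Rmult_l, is_RInt_pow_shift].
    replace (z - -1) with (1 + z) by ring. unfold Rdiv. ring.
Qed.

Lemma deg1_le_antideriv1 d l : deg1_le d l -> deg1_le (S d) (antideriv1 l).
Proof.
  intros H. induction l as [|[c j] l IH]; [constructor|]. inversion H; subst.
  constructor; simpl in *; [lia | apply IH; assumption].
Qed.

(* Integration by parts in closed form: [int_{-1}^1 L (1+x)^k] in terms of moments of [L']. *)
Lemma moment1_antideriv1 l k :
  INR (S k) * moment1 (antideriv1 l) k = 2 ^ (S k) * moment1 l 0 - moment1 l (S k).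
Proof.
  induction l as [|[c j] l IH]; [simpl; ring|].
  change (antideriv1 ((c, j) :: l)) with ((c / INR (S j), S j) :: antideriv1 l).
  cbn [moment1 fold_right]. fold (moment1 l 0) (moment1 l (S k)) (moment1 (antideriv1 l) k).
  rewrite Rmult_plus_distr_l, IH.
  replace (S (S j + k)) with (S (j + S k)) by lia. rewrite Nat.add_0_r.
  replace (2 ^ S (j + S k)) with (2 ^ S k * 2 ^ S j) by (rewrite <- pow_add; f_equal; lia).
  rewrite !S_INR, !plus_INR, !S_INR. pose proof (pos_INR j). pose proof (pos_INR k).
  field. lra.
Qed.

Lemma legendre_repr n : exists l, deg1_le n l /\ forall x, legendre n x = eval1 l x.
Proof. destruct (is_poly1_jacobi 0 0 n) as (l & H1 & _ & H3). exists l. split; auto. Qed.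

Lemma legendre_moment1 n l k : deg1_le n l -> (forall x, legendre n x = eval1 l x) ->
  (k < n)%nat -> moment1 l k = 0.
Proof.
  intros Hd He Hk.
  assert (Hpow : is_poly1 k 1 (fun x => (1 + x) ^ k)).
  { pose proof (is_poly1_pow _ _ _ k is_poly1_1px) as HB.
    rewrite Nat.mul_1_l, pow1 in HB. exact HB. }
  rewrite <- (is_RInt_unique _ _ _ _ (is_RInt_moment1 l k)).
  apply is_RInt_unique. eapply is_RInt_ext_R; [|apply (is_RInt_jacobi_orth_deg_lt 0 0 n k 1 _ Hpow Hk)].
  intros. unfold jacobi_weight, legendre in *. rewrite He. simpl. ring.
Qed.

Lemma intLegendre_repr n : (1 <= n)%nat -> exists l,
  deg1_le (n - 1) l /\ (forall x, legendre (n - 1) x = eval1 l x) /\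
  forall z, intLegendre n z = eval1 (antideriv1 l) z.
Proof.
  intros Hn. destruct (legendre_repr (n - 1)) as (l & Hd & He). exists l.
  repeat split; auto. intros z. unfold intLegendre.
  rewrite (RInt_ext _ (eval1 l)) by (intros; auto). apply is_RInt_unique, is_RInt_antideriv1.
Qed.

Lemma is_poly1_intLegendre n : (1 <= n)%nat -> exists e, is_poly1 n e (intLegendre n).
Proof.
  intros Hn. destruct (intLegendre_repr n Hn) as (l & Hd & _ & He).
  exists (coef1 n (antideriv1 l)), (antideriv1 l). repeat split; auto.
  replace n with (S (n - 1)) at 1 by lia. apply deg1_le_antideriv1; auto.
Qed.

Lemma intLegendre_continuous n x : (1 <= n)%nat -> continuous (intLegendre n) x.
Proof. intros Hn. destruct (is_poly1_intLegendre n Hn) as [e He]. eapply is_poly1_continuous; eauto. Qed.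

Lemma is_RInt_intLegendre_orth n m : (1 <= m)%nat -> (m + 3 <= n)%nat ->
  is_RInt (fun x => intLegendre n x * intLegendre m x) (-1) 1 0.
Proof.
  intros Hm Hn.
  destruct (intLegendre_repr n) as (l & Hd & He & Hn'); [lia|].
  destruct (intLegendre_repr m) as (l' & Hd' & _ & Hm'); [lia|].
  eapply is_RInt_ext_R; [|eapply is_RInt_eq_value; [|apply (is_RInt_eval1_mult (antideriv1 l) (antideriv1 l'))]].
  { intros. rewrite Hn', Hm'. reflexivity. }
  apply deg1_le_antideriv1 in Hd'. replace (S (m - 1)) with m in Hd' by lia.
  clear Hm'. induction (antideriv1 l') as [|[c k] lM IH]; simpl; auto.
  inversion Hd'; subst. simpl in *. rewrite IH by auto.
  enough (moment1 (antideriv1 l) k = 0) as -> by ring.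
  apply Rmult_eq_reg_l with (INR (S k)); [|apply not_0_INR; lia].
  rewrite moment1_antideriv1, (legendre_moment1 (n - 1) l 0), (legendre_moment1 (n - 1) l (S k));
    auto; try lia. ring.
Qed.

(* Cauchy-Schwarz: [L_n(x)^2 <= (x + 1) ||l_(n-1)||^2 <= 2 * 2]. *)
Lemma intLegendre_sq_le n x : (2 <= n)%nat -> -1 < x < 1 -> intLegendre n x ^ 2 <= 4.
Proof.
  intros Hn Hx. set (P := fun t => legendre (n - 1) t ^ 2).
  assert (Hc : forall t, continuous (legendre (n - 1)) t).
  { intros. apply (is_poly1_continuous _ _ _ _ (is_poly1_jacobi 0 0 (n - 1))). }
  assert (Hex : forall u v, ex_RInt P u v)
    by (intros; apply ex_RInt_continuous_R; intros; apply continuous_sq; auto).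
  assert (Hpos : forall u v, u <= v -> 0 <= RInt P u v)
    by (intros; apply RInt_ge_0; auto; intros; apply pow2_ge_0).
  assert (Hnorm : RInt P (-1) 1 <= 2).
  { pose proof (is_RInt_jacobi_gram 0 0 (n - 1) (n - 1)) as HG. rewrite Nat.eqb_refl in HG.
    rewrite (is_RInt_unique P _ _ (jacobi_norm2 0 0 (n - 1))); [apply legendre_norm2_le|].
    eapply is_RInt_ext_R; [|apply HG]. intros. unfold P, jacobi_weight, legendre. simpl. ring. }
  rewrite <- (RInt_Chasles P (-1) x 1) in Hnorm by auto.
  change (RInt P (-1) x + RInt P x 1 <= 2) in Hnorm.
  pose proof (Hpos x 1 ltac:(lra)). pose proof (Hpos (-1) x ltac:(lra)).
  unfold intLegendre. eapply Rle_trans; [apply RInt_sq_le; auto; lra|].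
  fold P. nra.
Qed.

Lemma intLegendre_norm2_le n : (2 <= n)%nat -> RInt (fun x => intLegendre n x ^ 2) (-1) 1 <= 8.
Proof.
  intros Hn. eapply Rle_trans.
  - apply (RInt_le _ (fun _ => 4)); [lra | | | intros; apply intLegendre_sq_le; auto].
    + apply ex_RInt_continuous_R. intros. apply continuous_sq, intLegendre_continuous. lia.
    + apply ex_RInt_continuous_R. intros; apply continuous_const.
  - rewrite RInt_const. unfold scal; simpl. unfold mult; simpl. lra.
Qed.

Lemma is_poly2_comp d e f g : is_poly1 d e f -> is_poly2 g -> is_poly2 (fun x y => f (g x y)).
Proof.
  intros (l & _ & _ & Hl) Hg. apply is_poly2_ext with (f := fun x y => eval1 l (g x y)).
  { intros. rewrite Hl. reflexivity. }
  clear Hl. induction l as [|[c k] l IH]; [exists nil; reflexivity|].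
  unfold eval1; cbn [fold_right]. fold (eval1 l).
  apply is_poly2_plus; auto. poly2; auto.
Qed.

(* [T^d f(S/T) = sum_k c_k (T + S)^k T^(d-k)] for [f = sum_k c_k (1 + x)^k] of degree [<= d]. *)
Lemma is_poly2_homogenize d e f (S T : R -> R -> R) :
  is_poly1 d e f -> is_poly2 S -> is_poly2 T -> (forall x y, interior_K x y -> T x y <> 0) ->
  is_poly2 (fun x y => T x y ^ d * f (S x y / T x y)).
Proof.
  intros (l & Hd & _ & Hl) HS HT HT0.
  apply is_poly2_ext with (f := fun x y => fold_right (fun '(c, k) acc =>
     c * (T x y + S x y) ^ k * T x y ^ (d - k) + acc) 0 l).
  { intros x y Hxy. rewrite Hl. specialize (HT0 x y Hxy). clear Hl.
    induction l as [|[c k] l IH]; [simpl; ring|].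
    inversion Hd; subst. simpl in *. rewrite IH by auto. rewrite Rmult_plus_distr_l. f_equal.
    replace (T x y ^ d) with (T x y ^ k * T x y ^ (d - k)) by (rewrite <- pow_add; f_equal; lia).
    replace (T x y + S x y) with (T x y * (1 + S x y / T x y)) by (field; auto).
    rewrite Rpow_mult_distr. ring. }
  clear Hl. induction l as [|[c k] l IH]; [exists nil; reflexivity|].
  inversion Hd; subst. cbn [fold_right]. apply is_poly2_plus; [poly2; auto | apply IH; auto].
Qed.

Lemma is_poly2_lam i : is_poly2 (lam i).
Proof.
  destruct i as [|[|[|[|i]]]]; unfold lam.
  - apply is_poly2_const.
  - poly2.
  - apply is_poly2_x.
  - apply is_poly2_y.
  - apply is_poly2_const.
Qed.

Lemma lam_edge_sum_pos m x y : interior_K x y -> 0 < lam (edge1 m) x y + lam (edge2 m) x y.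
Proof. intros (? & ? & ?). destruct m as [|[|[|[|m]]]]; simpl; lra. Qed.

Lemma is_poly2_phiE m i : is_poly2 (phiE m i).
Proof.
  unfold phiE, intLegendreS. apply is_poly2_scal.
  destruct (is_poly1_intLegendre (i + 2)) as [e He]; [lia|].
  apply (is_poly2_homogenize _ _ _ _ _ He); [poly2; apply is_poly2_lam ..|].
  intros. pose proof (lam_edge_sum_pos m x y H). lra.
Qed.

Lemma is_poly2_phiI0 i j : is_poly2 (phiI0 i j).
Proof.
  unfold phiI0. apply is_poly2_mult; [apply is_poly2_mult|].
  - repeat apply is_poly2_mult; apply is_poly2_lam.
  - unfold jacobiPS. apply (is_poly2_homogenize _ _ _ _ _ (is_poly1_jacobi 2 2 i));
      [poly2; apply is_poly2_lam ..|].
    intros. pose proof (lam_edge_sum_pos 1 x y H). simpl in *. lra.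
  - apply (is_poly2_comp _ _ _ _ (is_poly1_jacobi (2 * i + 5) 2 j)).
    poly2; apply is_poly2_lam.
Qed.

Lemma is_poly2_phiI i j : is_poly2 (phiI i j).
Proof. apply is_poly2_scal, is_poly2_phiI0. Qed.

Lemma is_poly2_uV aV : is_poly2 (uV aV).
Proof. apply is_poly2_Rsum. intros. apply is_poly2_scal, is_poly2_lam. Qed.

Lemma is_poly2_uE p m a : is_poly2 (uE p m a).
Proof. apply is_poly2_Rsum. intros. apply is_poly2_scal, is_poly2_phiE. Qed.

Definition uI_term (p : nat) (a : nat -> nat -> R) (i j : nat) (x y : R) : R :=
  if (i + j + 3 <=? p)%nat then a i j * phiI i j x y else 0.

Lemma is_poly2_uI_term p a i j : is_poly2 (uI_term p a i j).
Proof.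
  unfold uI_term. destruct (i + j + 3 <=? p)%nat;
    [apply is_poly2_scal, is_poly2_phiI | apply is_poly2_const].
Qed.

Lemma is_poly2_uI p a : is_poly2 (uI p a).
Proof.
  apply (is_poly2_Rsum _ (fun i x y => Rsum p (fun j => uI_term p a i j x y))).
  intros. apply is_poly2_Rsum. intros. apply is_poly2_uI_term.
Qed.

Lemma is_poly2_of_is_poly_deg p u : is_poly_deg p u -> is_poly2 u.
Proof.
  intros [c Hc]. apply is_poly2_ext with (f := fun x y => Rsum (S p) (fun i => Rsum (S p) (fun j =>
      if (i + j <=? p)%nat then c i j * x ^ i * y ^ j else 0))); [intros; rewrite Hc; reflexivity|].
  apply is_poly2_Rsum. intros i _. apply is_poly2_Rsum. intros j _.
  destruct (i + j <=? p)%nat; poly2.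
Qed.

(** * Orthonormality of the cell functions *)

(* The Duffy substitution [x = (1 - y) (1 - s) / 2] separates the variables. *)
Definition cell_y_factor (i j : nat) (y : R) : R :=
  (1 - y) ^ (i + 2) * y / 4 * jacobiP (2 * i + 5) 2 j (2 * y - 1).

Lemma phiI0_duffy i j y s : 0 < 1 - y ->
  phiI0 i j ((1 - y) * (1 - s) / 2) y
  = cell_y_factor i j y * ((1 - s) * (1 + s) * jacobiP 2 2 i s).
Proof.
  intros Hy. unfold phiI0, jacobiPS, cell_y_factor. cbn [lam].
  replace ((1 - (1 - y) * (1 - s) / 2 - y - (1 - y) * (1 - s) / 2)
           / (1 - (1 - y) * (1 - s) / 2 - y + (1 - y) * (1 - s) / 2))
    with s by (field; lra).
  replace (1 - (1 - y) * (1 - s) / 2 - y + (1 - y) * (1 - s) / 2) with (1 - y) by ring.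
  rewrite pow_add. simpl pow. field.
Qed.

Lemma RInt_phiI0_mult_x i j i' j' y : 0 < y < 1 ->
  RInt (fun x => phiI0 i j x y * phiI0 i' j' x y) 0 (1 - y)
  = (1 - y) / 2 * (cell_y_factor i j y * cell_y_factor i' j' y
                   * (if (i =? i')%nat then jacobi_norm2 2 2 i else 0)).
Proof.
  intros Hy. apply is_RInt_unique, is_RInt_rescale_rev; [lra|].
  eapply is_RInt_ext_R; [|apply is_RInt_Rmult_l, (is_RInt_jacobi_gram 2 2 i i')].
  intros s _. rewrite !phiI0_duffy by lra. unfold jacobi_weight. simpl pow. ring.
Qed.

Definition cell_norm2 (i j : nat) : R :=
  jacobi_norm2 2 2 i * jacobi_norm2 (2 * i + 5) 2 j / 2 ^ (2 * i + 13).

Lemma cell_norm2_pos i j : 0 < cell_norm2 i j.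
Proof.
  apply Rmult_lt_0_compat; [apply Rmult_lt_0_compat; apply jacobi_norm2_pos|].
  apply Rinv_0_lt_compat, pow_lt; lra.
Qed.

(* With [s = 2 y - 1] the [y]-factors carry the Jacobi weight [(1-s)^(2i+5) (1+s)^2]. *)
Lemma cell_y_factor_mult i j j' y :
  (1 - y) / 2 * (cell_y_factor i j y * cell_y_factor i j' y)
  = / 2 ^ (2 * i + 12) * (jacobi_weight (2 * i + 5) 2 (2 * y - 1)
      * jacobiP (2 * i + 5) 2 j (2 * y - 1) * jacobiP (2 * i + 5) 2 j' (2 * y - 1)).
Proof.
  unfold cell_y_factor, jacobi_weight.
  replace (1 - (2 * y - 1)) with (2 * (1 - y)) by ring.
  replace (1 + (2 * y - 1)) with (2 * y) by ring.
  rewrite !Rpow_mult_distr.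
  replace (2 ^ (2 * i + 12)) with (2 ^ (2 * i + 5) * 2 ^ 7) by (rewrite <- pow_add; f_equal; lia).
  replace ((1 - y) ^ (2 * i + 5)) with ((1 - y) ^ (i + 2) * (1 - y) ^ (i + 2) * (1 - y) ^ 1)
    by (rewrite <- !pow_add; f_equal; lia).
  simpl (2 ^ 7). simpl (2 ^ 2). rewrite pow_1. field. apply pow_nonzero; lra.
Qed.

Lemma phiI0_gram i j i' j' : int_K (fun x y => phiI0 i j x y * phiI0 i' j' x y) =
  if andb (i =? i')%nat (j =? j')%nat then cell_norm2 i j else 0.
Proof.
  rewrite int_K_swap by (apply is_poly2_mult; apply is_poly2_phiI0). unfold int_K.
  rewrite (RInt_ext _ (fun y => (1 - y) / 2 * (cell_y_factor i j y * cell_y_factor i' j' y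
                                 * (if (i =? i')%nat then jacobi_norm2 2 2 i else 0))))
    by (intros y Hy; rewrite Rmin_0_l, Rmax_0_l in Hy by lra; apply RInt_phiI0_mult_x; lra).
  destruct (Nat.eqb_spec i i') as [<-|]; cbn [andb].
  - pose proof (is_RInt_jacobi_gram (2 * i + 5) 2 j j') as HG.
    apply (is_RInt_Rmult_l _ _ _ (jacobi_norm2 2 2 i / 2 ^ (2 * i + 12))), is_RInt_rescale_01 in HG.
    apply is_RInt_unique. eapply is_RInt_ext_R; [|eapply is_RInt_eq_value; [|exact HG]].
    + intros y _. rewrite <- Rmult_assoc, cell_y_factor_mult. field. apply pow_nonzero; lra.
    + unfold cell_norm2. replace (2 ^ (2 * i + 13)) with (2 ^ (2 * i + 12) * 2 ^ 1)
        by (rewrite <- pow_add; f_equal; lia).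
      destruct (j =? j')%nat; field; apply pow_nonzero; lra.
  - rewrite (RInt_ext_R _ (fun _ => 0)) by (intros; ring). apply RInt_zero.
Qed.

Lemma phiI_gram i j i' j' : int_K (fun x y => phiI i j x y * phiI i' j' x y) =
  if andb (i =? i')%nat (j =? j')%nat then 1 else 0.
Proof.
  unfold phiI.
  rewrite (int_K_ext _ (fun x y => (cI i j * cI i' j') * (phiI0 i j x y * phiI0 i' j' x y)))
    by (intros; ring || (apply is_poly2_mult; apply is_poly2_phiI)).
  rewrite int_K_scal, phiI0_gram by (apply is_poly2_mult; apply is_poly2_phiI0).
  destruct (Nat.eqb_spec i i') as [<-|], (Nat.eqb_spec j j') as [<-|]; cbn [andb]; try ring.
  assert (Hn : L2sq (phiI0 i j) = cell_norm2 i j).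
  { rewrite L2sq_int_K, (int_K_ext _ (fun x y => phiI0 i j x y * phiI0 i j x y));
      [| intros; simpl; ring | apply is_poly2_pow, is_poly2_phiI0].
    rewrite phiI0_gram, !Nat.eqb_refl. reflexivity. }
  unfold cI. rewrite Hn. pose proof (cell_norm2_pos i j).
  rewrite <- Rinv_mult, sqrt_sqrt by lra. field. lra.
Qed.

Lemma int_K_zero_fun f : (forall x y, f x y = 0) -> int_K f = 0.
Proof.
  intros H. unfold int_K. rewrite (RInt_ext_R _ (fun _ => 0)); [apply RInt_zero|].
  intros x _. rewrite (RInt_ext_R _ (fun _ => 0)); [apply RInt_zero | intros; apply H].
Qed.

Lemma int_K_Rsum_mult n m F G :
  (forall i, (i < n)%nat -> is_poly2 (F i)) -> (forall j, (j < m)%nat -> is_poly2 (G j)) ->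
  int_K (fun x y => Rsum n (fun i => F i x y) * Rsum m (fun j => G j x y))
  = Rsum n (fun i => Rsum m (fun j => int_K (fun x y => F i x y * G j x y))).
Proof.
  intros HF HG.
  assert (HFG : forall i, (i < n)%nat ->
            is_poly2 (fun x y => Rsum m (fun j => F i x y * G j x y))).
  { intros i Hi. apply is_poly2_Rsum. intros j Hj. apply is_poly2_mult; auto. }
  rewrite (int_K_ext _ (fun x y => Rsum n (fun i => Rsum m (fun j => F i x y * G j x y))));
    [| intros; apply Rsum_mult | apply is_poly2_mult; apply is_poly2_Rsum; auto].
  rewrite int_K_Rsum by auto. apply Rsum_ext. intros i Hi.
  apply int_K_Rsum. intros j Hj. apply is_poly2_mult; auto.
Qed.

Lemma int_K_sq_Rsum_orthogonal n F v : (forall i, (i < n)%nat -> is_poly2 (F i)) ->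
  (forall i k, (i < n)%nat -> (k < n)%nat ->
     int_K (fun x y => F i x y * F k x y) = if (k =? i)%nat then v i else 0) ->
  int_K (fun x y => Rsum n (fun i => F i x y) ^ 2) = Rsum n v.
Proof.
  intros HF Horth.
  rewrite (int_K_ext _ (fun x y => Rsum n (fun i => F i x y) * Rsum n (fun k => F k x y)));
    [| intros; simpl; ring | apply is_poly2_pow, is_poly2_Rsum; auto].
  rewrite int_K_Rsum_mult by auto. apply Rsum_ext. intros i Hi.
  rewrite (Rsum_ext n _ (fun k => if (k =? i)%nat then v i else 0)) by auto.
  apply (Rsum_delta n i (fun _ => v i)). auto.
Qed.

Lemma uI_term_gram p a i j k l :
  int_K (fun x y => uI_term p a i j x y * uI_term p a k l x y)
  = if andb (k =? i)%nat (l =? j)%nat then (if (i + j + 3 <=? p)%nat then a i j ^ 2 else 0) else 0.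
Proof.
  unfold uI_term.
  destruct (i + j + 3 <=? p)%nat eqn:E1, (k + l + 3 <=? p)%nat eqn:E2;
    try (rewrite int_K_zero_fun by (intros; ring);
         destruct (Nat.eqb_spec k i) as [->|], (Nat.eqb_spec l j) as [->|]; cbn [andb]; congruence).
  rewrite (int_K_ext _ (fun x y => (a i j * a k l) * (phiI i j x y * phiI k l x y)))
    by (intros; ring || (apply is_poly2_mult; apply is_poly2_scal, is_poly2_phiI)).
  rewrite int_K_scal, phiI_gram by (apply is_poly2_mult; apply is_poly2_phiI).
  destruct (Nat.eqb_spec i k), (Nat.eqb_spec j l), (Nat.eqb_spec k i), (Nat.eqb_spec l j);
    subst; cbn [andb]; try lia; ring.
Qed.

Lemma uI_norm2 p a : L2sq (uI p a) = sqI p a.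
Proof.
  apply (int_K_sq_Rsum_orthogonal p (fun i x y => Rsum p (fun j => uI_term p a i j x y))).
  { intros i _. apply is_poly2_Rsum. intros. apply is_poly2_uI_term. }
  intros i k Hi Hk.
  rewrite int_K_Rsum_mult by (intros; apply is_poly2_uI_term).
  destruct (Nat.eqb_spec k i) as [->|Hki].
  - apply Rsum_ext. intros j Hj.
    rewrite (Rsum_ext p _ (fun l => if (l =? j)%nat then (if (i + j + 3 <=? p)%nat then a i j ^ 2 else 0) else 0))
      by (intros; rewrite uI_term_gram, Nat.eqb_refl; reflexivity).
    apply (Rsum_delta p j (fun _ => _)). auto.
  - apply Rsum_zero. intros j _. apply Rsum_zero. intros l _.
    rewrite uI_term_gram. destruct (Nat.eqb_spec k i); [lia | reflexivity].
Qed.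

(** * The edge functions *)

Definition edge_scale (j : nat) : R := sqrt ((2 * INR j + 3) / 2).

Definition intLegendre_gram (n m : nat) : R := RInt (fun s => intLegendre n s * intLegendre m s) (-1) 1.

Lemma is_RInt_intLegendre_gram n m : (1 <= n)%nat -> (1 <= m)%nat ->
  is_RInt (fun s => intLegendre n s * intLegendre m s) (-1) 1 (intLegendre_gram n m).
Proof.
  intros. apply (RInt_correct (fun s => intLegendre n s * intLegendre m s)).
  apply ex_RInt_continuous_R. intros.
  apply (continuous_mult (intLegendre n) (intLegendre m)); apply intLegendre_continuous; auto.
Qed.

(* On the segments parallel to edge [m], [phiE m j] is [edge_scale j * r^(j+2) L_(j+2)(s)], where
   [r] is the length of the segment relative to the edge and [s] in [[-1, 1]] the position on it. *)
Lemma phiE1_param j y s : 0 < 1 - y ->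
  phiE 1 j ((1 - y) * (1 + s) / 2) y = edge_scale j * ((1 - y) ^ (j + 2) * intLegendre (j + 2) s).
Proof.
  intros Hy. unfold phiE, intLegendreS, edge_scale. cbn [lam edge1 edge2].
  replace ((((1 - y) * (1 + s) / 2) - (1 - (1 - y) * (1 + s) / 2 - y))
           / (1 - (1 - y) * (1 + s) / 2 - y + (1 - y) * (1 + s) / 2)) with s by (field; lra).
  replace (1 - (1 - y) * (1 + s) / 2 - y + (1 - y) * (1 + s) / 2) with (1 - y) by ring.
  reflexivity.
Qed.

Lemma phiE2_param j t s : 0 < t ->
  phiE 2 j (t * (1 - s) / 2) (t - t * (1 - s) / 2) = edge_scale j * (t ^ (j + 2) * intLegendre (j + 2) s).
Proof.
  intros Ht. unfold phiE, intLegendreS, edge_scale. cbn [lam edge1 edge2].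
  replace ((t - t * (1 - s) / 2 - t * (1 - s) / 2) / (t * (1 - s) / 2 + (t - t * (1 - s) / 2)))
    with s by (field; lra).
  replace (t * (1 - s) / 2 + (t - t * (1 - s) / 2)) with t by ring.
  reflexivity.
Qed.

Lemma phiE3_param j x s : 0 < 1 - x ->
  phiE 3 j x ((1 - x) * (1 - s) / 2) = edge_scale j * ((1 - x) ^ (j + 2) * intLegendre (j + 2) s).
Proof.
  intros Hx. unfold phiE, intLegendreS, edge_scale. cbn [lam edge1 edge2].
  replace ((1 - x - (1 - x) * (1 - s) / 2 - (1 - x) * (1 - s) / 2)
           / ((1 - x) * (1 - s) / 2 + (1 - x - (1 - x) * (1 - s) / 2))) with s by (field; lra).
  replace ((1 - x) * (1 - s) / 2 + (1 - x - (1 - x) * (1 - s) / 2)) with (1 - x) by ring.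
  reflexivity.
Qed.

Definition edge_gram (j k : nat) : R :=
  edge_scale j * edge_scale k * intLegendre_gram (j + 2) (k + 2) / (2 * INR (j + k + 6)).

Lemma is_RInt_edge_outer (r : R -> R) j k :
  is_RInt (fun t => r t ^ (j + k + 5)) 0 1 (/ INR (S (j + k + 5))) ->
  is_RInt (fun t => r t / 2 * (edge_scale j * edge_scale k * (r t ^ (j + 2) * r t ^ (k + 2))
                               * intLegendre_gram (j + 2) (k + 2))) 0 1 (edge_gram j k).
Proof.
  intros H. set (c := edge_scale j * edge_scale k * intLegendre_gram (j + 2) (k + 2)).
  apply (is_RInt_Rmult_l _ _ _ (c / 2)) in H.
  eapply is_RInt_ext_R; [|eapply is_RInt_eq_value; [|exact H]].
  - intros. rewrite <- !pow_add. replace (j + k + 5)%nat with (S (j + 2 + (k + 2))) by lia.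
    rewrite <- tech_pow_Rmult. unfold c. field.
  - unfold edge_gram. fold c. replace (S (j + k + 5)) with (j + k + 6)%nat by lia.
    field. apply not_0_INR; lia.
Qed.

Lemma phiE_gram m j k : (1 <= m <= 3)%nat ->
  int_K (fun x y => phiE m j x y * phiE m k x y) = edge_gram j k.
Proof.
  intros Hm. pose proof (is_RInt_intLegendre_gram (j + 2) (k + 2) ltac:(lia) ltac:(lia)) as HM.
  pose proof (is_RInt_1m_pow_01 (j + k + 5)) as H1m. pose proof (is_RInt_pow_01 (j + k + 5)) as H1.
  destruct m as [|[|[|[|m]]]]; try lia.
  - rewrite int_K_swap by (apply is_poly2_mult; apply is_poly2_phiE).
    apply is_RInt_unique. eapply is_RInt_ext_R; [|apply (is_RInt_edge_outer (fun y => 1 - y)), H1m].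
    intros y Hy. rewrite Rmin_0_l, Rmax_0_l in Hy by lra. symmetry. apply is_RInt_unique.
    apply is_RInt_rescale; [lra|].
    eapply is_RInt_ext_R; [|apply is_RInt_Rmult_l, HM].
    intros s _. rewrite !phiE1_param by lra. ring.
  - rewrite <- int_K_shear by (apply is_poly2_mult; apply is_poly2_phiE).
    apply is_RInt_unique. eapply is_RInt_ext_R; [|apply (is_RInt_edge_outer (fun t => t)), H1].
    intros t Ht. rewrite Rmin_0_l, Rmax_0_l in Ht by lra. symmetry. apply is_RInt_unique.
    apply (is_RInt_rescale_rev (fun x => phiE 2 j x (t - x) * phiE 2 k x (t - x))); [lra|].
    eapply is_RInt_ext_R; [|apply is_RInt_Rmult_l, HM].
    intros s _. rewrite !phiE2_param by lra. ring.
  - apply is_RInt_unique. eapply is_RInt_ext_R; [|apply (is_RInt_edge_outer (fun x => 1 - x)), H1m].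
    intros x Hx. rewrite Rmin_0_l, Rmax_0_l in Hx by lra. symmetry. apply is_RInt_unique.
    apply (is_RInt_rescale_rev (fun y => phiE 3 j x y * phiE 3 k x y)); [lra|].
    eapply is_RInt_ext_R; [|apply is_RInt_Rmult_l, HM].
    intros s _. rewrite !phiE3_param by lra. ring.
Qed.

Lemma edge_gram_sym j k : edge_gram j k = edge_gram k j.
Proof.
  unfold edge_gram, intLegendre_gram.
  rewrite (RInt_ext_R (fun s => intLegendre (j + 2) s * intLegendre (k + 2) s)
                      (fun s => intLegendre (k + 2) s * intLegendre (j + 2) s)) by (intros; ring).
  replace (k + j + 6)%nat with (j + k + 6)%nat by lia. rewrite (Rmult_comm (edge_scale j)). reflexivity.
Qed.

Lemma edge_gram_band j k : (k + 3 <= j)%nat -> edge_gram j k = 0.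
Proof.
  intros H. unfold edge_gram, intLegendre_gram.
  rewrite (is_RInt_unique _ _ _ _ (is_RInt_intLegendre_orth (j + 2) (k + 2) ltac:(lia) ltac:(lia))).
  unfold Rdiv. ring.
Qed.

Lemma edge_gram_diag_le j : edge_gram j j <= 2.
Proof.
  unfold edge_gram, edge_scale. rewrite sqrt_sqrt by (pose proof (pos_INR j); lra).
  assert (HM : intLegendre_gram (j + 2) (j + 2) <= 8).
  { unfold intLegendre_gram. rewrite (RInt_ext_R _ (fun s => intLegendre (j + 2) s ^ 2)) by (intros; ring).
    apply intLegendre_norm2_le. lia. }
  rewrite !plus_INR. replace (INR 6) with 6 by (simpl; ring). pose proof (pos_INR j).
  unfold Rdiv. apply Rmult_le_reg_r with (2 * (INR j + INR j + 6)); [lra|].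
  rewrite Rmult_assoc, Rinv_l, Rmult_1_r by lra. nra.
Qed.

(* The Gram matrix is positive semidefinite: expand [int_K (phiE m j + s phiE m k)^2 >= 0]. *)
Lemma edge_gram_bound m j k : (1 <= m <= 3)%nat -> -2 <= edge_gram j k <= 2.
Proof.
  intros Hm.
  assert (Hquad : forall s, 0 <= edge_gram j j + 2 * s * edge_gram j k + s ^ 2 * edge_gram k k).
  { intros s. pose proof (is_poly2_phiE m j) as Pj. pose proof (is_poly2_phiE m k) as Pk.
    rewrite <- !(phiE_gram m) by auto.
    rewrite <- !int_K_scal, <- !int_K_plus by (repeat apply is_poly2_plus; repeat apply is_poly2_scal;
                                               apply is_poly2_mult; auto).
    apply int_K_ge0; [repeat apply is_poly2_plus; repeat apply is_poly2_scal; apply is_poly2_mult; auto|].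
    intros x y _. pose proof (pow2_ge_0 (phiE m j x y + s * phiE m k x y)). nra. }
  pose proof (Hquad 1) as H1. pose proof (Hquad (-1)) as H2.
  pose proof (edge_gram_diag_le j). pose proof (edge_gram_diag_le k). simpl in *. lra.
Qed.

Definition near (j k : nat) : bool := ((j <=? k + 2) && (k <=? j + 2))%bool.

Lemma Rsum_near_count N j : Rsum N (fun k => if near j k then 1 else 0) <= 5.
Proof.
  assert (E : Rsum N (fun k => if near j k then 1 else 0) = INR (Nat.min N (j + 3) - (j - 2))).
  { induction N as [|N IH]; [reflexivity|].
    rewrite Rsum_S, IH. unfold near.
    destruct (Nat.leb_spec j (N + 2)), (Nat.leb_spec N (j + 2)); cbn [andb].
    all: try (replace (Nat.min (S N) (j + 3) - (j - 2))%nat with (S (Nat.min N (j + 3) - (j - 2)))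
                by lia; rewrite S_INR; ring).
    all: replace (Nat.min (S N) (j + 3) - (j - 2))%nat with (Nat.min N (j + 3) - (j - 2))%nat
           by lia; ring. }
  rewrite E. replace 5 with (INR 5) by (simpl; ring). apply le_INR. lia.
Qed.

Lemma Rsum_near_sq N (a : nat -> R) :
  Rsum N (fun j => Rsum N (fun k => if near j k then a j ^ 2 else 0))
  <= 5 * Rsum N (fun j => a j ^ 2).
Proof.
  rewrite <- Rsum_scal. apply Rsum_le. intros j Hj.
  rewrite (Rsum_ext N _ (fun k => a j ^ 2 * (if near j k then 1 else 0)))
    by (intros; destruct (near j i); ring).
  rewrite Rsum_scal. pose proof (Rsum_near_count N j). pose proof (pow2_ge_0 (a j)). nra.
Qed.

(* [a_j a_k G_jk <= c (a_j^2 + a_k^2) / 2], and each row has at most five nonzero entries. *)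
Lemma banded_form_le N (G : nat -> nat -> R) (a : nat -> R) c :
  (forall j k, -c <= G j k <= c) -> (forall j k, (k + 3 <= j)%nat -> G j k = 0) ->
  (forall j k, G j k = G k j) ->
  Rsum N (fun j => Rsum N (fun k => a j * a k * G j k)) <= 5 * c * Rsum N (fun j => a j ^ 2).
Proof.
  intros Hb Hband Hsym.
  set (Snear := Rsum N (fun j => Rsum N (fun k => if near j k then a j ^ 2 else 0))).
  assert (Hterm : forall j k, a j * a k * G j k
            <= c / 2 * ((if near j k then a j ^ 2 else 0) + (if near k j then a k ^ 2 else 0))).
  { intros j k. unfold near. destruct (Nat.leb_spec j (k + 2)), (Nat.leb_spec k (j + 2)); cbn [andb].
    - specialize (Hb j k). pose proof (pow2_ge_0 (a j + a k)). pose proof (pow2_ge_0 (a j - a k)). nra.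
    - rewrite Hsym, Hband by lia. lra.
    - rewrite Hband by lia. lra.
    - lia. }
  assert (Hswap : Rsum N (fun j => Rsum N (fun k => if near k j then a k ^ 2 else 0)) = Snear).
  { unfold Snear. apply (Rsum_swap N N (fun j k => if near k j then a k ^ 2 else 0)). }
  eapply Rle_trans.
  - apply Rsum_le. intros j _. apply Rsum_le. intros k _. apply Hterm.
  - rewrite (Rsum_ext N _ (fun j => c / 2 * (Rsum N (fun k => if near j k then a j ^ 2 else 0)
                                      + Rsum N (fun k => if near k j then a k ^ 2 else 0))))
      by (intros; rewrite <- Rsum_plus, <- Rsum_scal; reflexivity).
    rewrite Rsum_scal, Rsum_plus, Hswap. fold Snear.
    pose proof (Rsum_near_sq N a) as Hnear. pose proof (Hb 0%nat 0%nat) as Hc. fold Snear in Hnear. nra.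
Qed.

Lemma uE_norm2_le p m a : (1 <= m <= 3)%nat -> L2sq (uE p m a) <= 10 * sqE p a.
Proof.
  intros Hm. unfold sqE. replace 10 with (5 * 2) by ring.
  rewrite L2sq_int_K.
  rewrite (int_K_ext _ (fun x y => Rsum (Nat.pred p) (fun j => a j * phiE m j x y)
                                   * Rsum (Nat.pred p) (fun k => a k * phiE m k x y)));
    [| intros; unfold uE; simpl; ring | apply is_poly2_pow, is_poly2_uE].
  rewrite int_K_Rsum_mult by (intros; apply is_poly2_scal, is_poly2_phiE).
  rewrite (Rsum_ext _ _ (fun j => Rsum (Nat.pred p) (fun k => a j * a k * edge_gram j k))).
  - apply banded_form_le; [intros; eapply edge_gram_bound; eauto | apply edge_gram_band | apply edge_gram_sym].
  - intros j _. apply Rsum_ext. intros k _.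
    rewrite (int_K_ext _ (fun x y => (a j * a k) * (phiE m j x y * phiE m k x y)));
      [| intros; ring | apply is_poly2_mult; apply is_poly2_scal, is_poly2_phiE].
    rewrite int_K_scal, phiE_gram by (auto; apply is_poly2_mult; apply is_poly2_phiE). reflexivity.
Qed.

(** * The vertex functions and the main estimate *)

Lemma sqV_nonneg aV : 0 <= sqV aV.
Proof. apply Rsum_nonneg. intros; apply pow2_ge_0. Qed.

(* Cauchy-Schwarz pointwise, with [lam1^2 + lam2^2 + lam3^2 <= (lam1 + lam2 + lam3)^2 = 1]. *)
Lemma uV_norm2_le aV : L2sq (uV aV) <= sqV aV.
Proof.
  assert (HV : forall x y, uV aV x y = aV 1%nat * lam 1 x y + aV 2%nat * lam 2 x y + aV 3%nat * lam 3 x y)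
    by (intros; unfold uV, phiV, Rsum; simpl; ring).
  assert (HS : sqV aV = aV 1%nat ^ 2 + aV 2%nat ^ 2 + aV 3%nat ^ 2) by (unfold sqV, Rsum; simpl; ring).
  rewrite L2sq_int_K. eapply Rle_trans.
  - apply (int_K_le _ (fun _ _ => sqV aV)); [apply is_poly2_pow, is_poly2_uV | apply is_poly2_const|].
    intros x y (Hx & Hy & Hxy). rewrite HV, HS. cbn [lam].
    set (a1 := aV 1%nat). set (a2 := aV 2%nat). set (a3 := aV 3%nat). set (l1 := 1 - x - y).
    assert (CS : (a1 * l1 + a2 * x + a3 * y) ^ 2 <= (a1 ^ 2 + a2 ^ 2 + a3 ^ 2) * (l1 ^ 2 + x ^ 2 + y ^ 2)).
    { pose proof (pow2_ge_0 (a1 * x - a2 * l1)). pose proof (pow2_ge_0 (a1 * y - a3 * l1)).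
      pose proof (pow2_ge_0 (a2 * y - a3 * x)). nra. }
    assert (L : l1 ^ 2 + x ^ 2 + y ^ 2 <= 1).
    { assert (l1 + x + y = 1) by (unfold l1; ring). assert (0 < l1) by (unfold l1; lra). nra. }
    pose proof (pow2_ge_0 a1). pose proof (pow2_ge_0 a2). pose proof (pow2_ge_0 a3). nra.
  - rewrite int_K_const. pose proof (sqV_nonneg aV). lra.
Qed.

Lemma sq_sum5_le a b c d e :
  (a + b + c + d + e) ^ 2 <= 5 * (a ^ 2 + b ^ 2 + c ^ 2 + d ^ 2 + e ^ 2).
Proof.
  pose proof (pow2_ge_0 (a - b)). pose proof (pow2_ge_0 (a - c)). pose proof (pow2_ge_0 (a - d)).
  pose proof (pow2_ge_0 (a - e)). pose proof (pow2_ge_0 (b - c)). pose proof (pow2_ge_0 (b - d)).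
  pose proof (pow2_ge_0 (b - e)). pose proof (pow2_ge_0 (c - d)). pose proof (pow2_ge_0 (c - e)).
  pose proof (pow2_ge_0 (d - e)). nra.
Qed.

Lemma L2sq_sum5_le u f1 f2 f3 f4 f5 :
  is_poly2 u -> is_poly2 f1 -> is_poly2 f2 -> is_poly2 f3 -> is_poly2 f4 -> is_poly2 f5 ->
  (forall x y, interior_K x y -> u x y = f1 x y + f2 x y + f3 x y + f4 x y + f5 x y) ->
  L2sq u <= 5 * (L2sq f1 + L2sq f2 + L2sq f3 + L2sq f4 + L2sq f5).
Proof.
  intros Pu P1 P2 P3 P4 P5 Hu. rewrite !L2sq_int_K.
  rewrite <- (int_K_plus (fun x y => f1 x y ^ 2)), <- !int_K_plus, <- int_K_scal;
    try (repeat apply is_poly2_plus; apply is_poly2_pow; auto).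
  apply int_K_le; [apply is_poly2_pow; auto | apply is_poly2_scal; repeat apply is_poly2_plus; apply is_poly2_pow; auto |].
  intros x y Hxy. rewrite Hu by auto. apply sq_sum5_le.
Qed.

Lemma sqE_nonneg p a : 0 <= sqE p a.
Proof. apply Rsum_nonneg. intros; apply pow2_ge_0. Qed.

Lemma sqI_nonneg p a : 0 <= sqI p a.
Proof.
  apply Rsum_nonneg. intros. apply Rsum_nonneg. intros j _.
  destruct (i + j + 3 <=? p)%nat; [apply pow2_ge_0 | lra].
Qed.

Theorem lemma4p2 :
  exists C : R, 0 < C /\
  forall (p : nat) (u : R -> R -> R) (aV : nat -> R) (aE : nat -> nat -> R)
         (aI : nat -> nat -> R),
    is_poly_deg p u ->
    (forall x y, inK x y ->
       u x y = uV aV x y + uE p 1 (aE 1%nat) x y + uE p 2 (aE 2%nat) x y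
               + uE p 3 (aE 3%nat) x y + uI p aI x y) ->
    L2sq (uV aV) <= C * sqV aV /\
    (forall m : nat, (1 <= m <= 3)%nat -> L2sq (uE p m (aE m)) <= C * sqE p (aE m)) /\
    L2sq (uI p aI) = sqI p aI /\
    L2sq u <= C * (sqV aV + (sqE p (aE 1%nat) + sqE p (aE 2%nat) + sqE p (aE 3%nat))
                   + sqI p aI).
Proof.
  exists 50. split; [lra|]. intros p u aV aE aI Hpu Hu.
  pose proof (uV_norm2_le aV). pose proof (uI_norm2 p aI).
  pose proof (uE_norm2_le p 1 (aE 1%nat) ltac:(lia)). pose proof (uE_norm2_le p 2 (aE 2%nat) ltac:(lia)).
  pose proof (uE_norm2_le p 3 (aE 3%nat) ltac:(lia)).
  pose proof (L2sq_sum5_le u _ _ _ _ _ (is_poly2_of_is_poly_deg p u Hpu) (is_poly2_uV aV)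
    (is_poly2_uE p 1 (aE 1%nat)) (is_poly2_uE p 2 (aE 2%nat)) (is_poly2_uE p 3 (aE 3%nat))
    (is_poly2_uI p aI) (fun x y H => Hu x y (interior_K_inK x y H))).
  pose proof (sqV_nonneg aV). pose proof (sqI_nonneg p aI). pose proof (sqE_nonneg p (aE 1%nat)).
  pose proof (sqE_nonneg p (aE 2%nat)). pose proof (sqE_nonneg p (aE 3%nat)).
  repeat split; try lra.
  intros m Hm. pose proof (uE_norm2_le p m (aE m) Hm). pose proof (sqE_nonneg p (aE m)). lra.
Qed.
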